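(* Let $\varepsilon>0$. For a prime $q\leqslant x^{1-\varepsilon}$, real $z\leqslant 2x$, and any interval $I\subset[x,3x]$, \[ \frac1{\varphi(q)}\sum_{\chi\neq\chi_0}\left|\sum_{\substack{c^6\leqslant z\\ nc^6\in I}}\mu(c)\chi(n)\chi(c)^6f(n)\right|^2\ll_\varepsilon\Big(z^{\frac13}+|I|^{\frac16}q^{\frac56}\Big)\log^6x, \] where $|I|$ is the length of $I$.
   Context: Sums run over positive integers $n,c$; the outer sum is over non-principal Dirichlet characters $\chi$ modulo $q$ ($\chi_0$ the principal character). $\mu$ is the Möbius function and $\varphi$ Euler's totient function. $f(u):=\frac{\zeta(3/2)}{2u^{1/2}}+\frac{\zeta(2/3)}{3u^{2/3}}$ for $u>0$. *)

From Stdlib Require Import Reals Lra List.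
From Coquelicot Require Import Coquelicot.
From mathcomp Require ssrnat seq prime.
Open Scope R_scope.

(* Mobius function: mu n = (-1)^(number of prime factors) if n is squarefree, 0 otherwise
   (mu 1 = 1; value at 0 irrelevant, never used). *)
Definition mobius (n : nat) : R :=
  if (n =? 0)%nat then 0 else
  if forallb (fun p => (prime.logn p n =? 1)%nat) (prime.primes n)
  then (-1) ^ (length (prime.primes n)) else 0.

Definition phi (n : nat) : nat := prime.totient n.

(* real power t^s, with 0^s = 0 (for s > 0) and t^s = 0 for t <= 0 *)
Definition rpow (t s : R) : R := if Rlt_dec 0 t then Rpower t s else 0.

(* Riemann zeta on (0, +oo) \ {1} via the Dirichlet eta function:
   zeta s = (1 - 2^(1-s))^(-1) * sum_{n>=1} (-1)^(n-1) n^(-s).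
   For s > 1 this is the usual Dirichlet series; for 0 < s < 1 it is the
   value of the analytic continuation (e.g. zeta(2/3)). *)
Definition zeta (s : R) : R :=
  / (1 - Rpower 2 (1 - s)) *
  Series (fun n : nat => (-1) ^ n / Rpower (INR (S n)) s).

Definition f (u : R) : R :=
  zeta (3/2) / (2 * Rpower u (1/2)) + zeta (2/3) / (3 * Rpower u (2/3)).

Definition dirichlet_char (q : nat) (chi : nat -> C) : Prop :=
  chi 1%nat = RtoC 1 /\
  (forall m n : nat, chi (m * n)%nat = Cmult (chi m) (chi n)) /\
  (forall n : nat, chi (n + q)%nat = chi n) /\
  (forall n : nat, chi n = RtoC 0 <-> Nat.gcd n q <> 1%nat).

Definition principal_char (q : nat) (n : nat) : C :=
  if (Nat.gcd n q =? 1)%nat then RtoC 1 else RtoC 0.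

(* L lists every non-principal character mod q exactly once
   (distinctness is extensional: distinct entries differ at some n). *)
Definition enum_nonprincipal (q : nat) (L : list (nat -> C)) : Prop :=
  ForallOrdPairs (fun g h => exists n : nat, g n <> h n) L /\
  (forall chi, In chi L <-> (dirichlet_char q chi /\ ~ (forall n, chi n = principal_char q n))).

(* An interval I with endpoints a <= b; lc / rc say whether a / b belong to I.
   Its length |I| is b - a. *)
Definition in_interval (a b : R) (lc rc : bool) (t : R) : bool :=
  (if lc then if Rle_dec a t then true else false
         else if Rlt_dec a t then true else false) &&
  (if rc then if Rle_dec t b then true else false
         else if Rlt_dec t b then true else false).

(* Both indices run over 1..K; K is any bound
   with K >= 3x, which suffices because n c^6 in I subset [x,3x] forces
   n <= 3x and c <= c^6 <= 3x. *)
Definition inner_sum (K : nat) (z a b : R) (lc rc : bool) (chi : nat -> C) : C :=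
  sum_n (fun c : nat =>
    sum_n (fun n : nat =>
      if ((1 <=? c)%nat && (1 <=? n)%nat &&
          (if Rle_dec (INR c ^ 6) z then true else false) &&
          in_interval a b lc rc (INR n * INR c ^ 6))%bool
      then Cmult (Cmult (Cmult (RtoC (mobius c)) (chi n)) (pow_n (chi c) 6)) (RtoC (f (INR n)))
      else RtoC 0) K) K.

Definition char_sum (q : nat) (L : list (nat -> C)) (K : nat) (z a b : R) (lc rc : bool) : R :=
  / INR (phi q) *
  fold_right (fun chi acc => Cmod (inner_sum K z a b lc rc chi) ^ 2 + acc) 0 L.

From Pilot Require Import Defs.
From Stdlib Require Import Reals List.
From Coquelicot Require Import Coquelicot.
From mathcomp Require ssrnat prime.
From Stdlib Require Import Lra Lia Permutation Arith Bool ZArith Classical.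
From mathcomp Require ssreflect ssrfun ssrbool eqtype div cyclic.
Import Pilot.Defs.
Open Scope R_scope.

(* Write the inner sum as [sum_{r mod q} chi(r) A(r)], where [A(r)] collects the terms
   with [n c^6 = r (mod q)].  For non-principal [chi] one may drop the class [0] and
   subtract any constant from [A], so by Bessel's inequality for the orthogonal
   characters the left-hand side is at most [sum_{r <> 0} |A(r) - M|^2].  Split the
   [c]-sum at [m ~ min(z, |I|/q)^(1/6)].  For [c <= m], the map [n |-> n c^6] permutes the
   nonzero classes and [f] is decreasing, so the classes [r] and [1] differ by at most
   [sup f ~ c^3 / sqrt x]; taking [M] the class-[1] part of these [c] gives an error
   [q m^8 / x <= z^(1/3)].  For [c > m], Minkowski's inequality and the bound
   [||A_c||_2^2 <= max_r A_c(r) * sum_r A_c(r)] give the same order.  The result is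
   [O(z^(1/3))], and [ln x] is bounded below because [2 <= q <= x^(1 - eps)]. *)

Fixpoint sumR (f : nat -> R) (N : nat) : R :=
  match N with O => 0 | S n => sumR f n + f n end.

Fixpoint sumC (f : nat -> C) (N : nat) : C :=
  match N with O => RtoC 0 | S n => Cplus (sumC f n) (f n) end.

Lemma sumR_ext f g N : (forall i, (i < N)%nat -> f i = g i) -> sumR f N = sumR g N.
Proof. induction N; intros H; simpl; auto. rewrite IHN, H; auto; intros; apply H; lia. Qed.

Lemma sumR_le f g N : (forall i, (i < N)%nat -> f i <= g i) -> sumR f N <= sumR g N.
Proof.
  induction N; intros H; simpl; [lra|].
  assert (f N <= g N) by (apply H; lia).
  assert (sumR f N <= sumR g N) by (apply IHN; intros; apply H; lia). lra.
Qed.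

Lemma sumR_zero N : sumR (fun _ => 0) N = 0.
Proof. induction N; simpl; auto. rewrite IHN; lra. Qed.

Lemma sumR_nonneg f N : (forall i, (i < N)%nat -> 0 <= f i) -> 0 <= sumR f N.
Proof. intros H. rewrite <- (sumR_zero N). now apply sumR_le. Qed.

Lemma sumR_le_length f N N' : (forall i, 0 <= f i) -> (N <= N')%nat -> sumR f N <= sumR f N'.
Proof. intros Hf H. induction H; simpl; [lra|]. specialize (Hf m). lra. Qed.

Lemma sumR_plus f g N : sumR (fun i => f i + g i) N = sumR f N + sumR g N.
Proof. induction N; simpl; [lra|]. rewrite IHN. lra. Qed.

Lemma sumR_minus f g N : sumR (fun i => f i - g i) N = sumR f N - sumR g N.
Proof. induction N; simpl; [lra|]. rewrite IHN. lra. Qed.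

Lemma sumR_scal k f N : sumR (fun i => k * f i) N = k * sumR f N.
Proof. induction N; simpl; [lra|]. rewrite IHN. lra. Qed.

Lemma sumR_const k N : sumR (fun _ => k) N = INR N * k.
Proof. induction N; [simpl; lra|]. cbn [sumR]. rewrite IHN, S_INR. lra. Qed.

Lemma sumR_Rabs f N : Rabs (sumR f N) <= sumR (fun i => Rabs (f i)) N.
Proof.
  induction N; simpl; [rewrite Rabs_R0; lra|].
  eapply Rle_trans; [apply Rabs_triang|lra].
Qed.

Lemma sumR_swap (f : nat -> nat -> R) M N :
  sumR (fun i => sumR (fun j => f i j) N) M = sumR (fun j => sumR (fun i => f i j) M) N.
Proof. induction M; simpl; [now rewrite sumR_zero|]. now rewrite IHM, <- sumR_plus. Qed.

Lemma sumR_split N m f : (m <= N)%nat ->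
  sumR f N = sumR f m + sumR (fun i => f (i + m)%nat) (N - m).
Proof.
  intros H. induction N; [replace m with 0%nat by lia; simpl; lra|].
  destruct (Nat.eq_dec m (S N)) as [->|Hm]; [rewrite Nat.sub_diag; simpl; lra|].
  replace (S N - m)%nat with (S (N - m)) by lia. simpl. rewrite IHN by lia.
  replace (N - m + m)%nat with N by lia. lra.
Qed.

Lemma sumR_vanish f N : (forall i, (i < N)%nat -> f i = 0) -> sumR f N = 0.
Proof. intros H. rewrite <- (sumR_zero N). now apply sumR_ext. Qed.

Lemma sumR_delta q (k : nat) (g : nat -> R) : (k < q)%nat ->
  sumR (fun r => if (k =? r)%nat then g r else 0) q = g k.
Proof.
  intros H. induction q; [lia|]. simpl.
  destruct (Nat.eq_dec k q) as [->|Hk].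
  - rewrite Nat.eqb_refl, sumR_vanish; [lra|].
    intros i Hi. destruct (Nat.eqb_spec q i); [lia|auto].
  - rewrite IHq by lia. destruct (Nat.eqb_spec k q); [lia|lra].
Qed.

Lemma sumC_ext f g N : (forall i, (i < N)%nat -> f i = g i) -> sumC f N = sumC g N.
Proof. induction N; intros H; simpl; auto. rewrite IHN, H; auto; intros; apply H; lia. Qed.

Lemma sumC_plus f g N : sumC (fun i => Cplus (f i) (g i)) N = Cplus (sumC f N) (sumC g N).
Proof. induction N; simpl; [|rewrite IHN]; apply injective_projections; simpl; lra. Qed.

Lemma sumC_minus f g N : sumC (fun i => Cminus (f i) (g i)) N = Cminus (sumC f N) (sumC g N).
Proof. induction N; simpl; [|rewrite IHN]; apply injective_projections; simpl; lra. Qed.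

Lemma sumC_zero N : sumC (fun _ => RtoC 0) N = RtoC 0.
Proof. induction N; simpl; [|rewrite IHN]; auto; apply injective_projections; simpl; lra. Qed.

Lemma sumC_scal k f N : sumC (fun i => Cmult k (f i)) N = Cmult k (sumC f N).
Proof. induction N; simpl; [|rewrite IHN]; apply injective_projections; simpl; lra. Qed.

Lemma sumC_swap (f : nat -> nat -> C) M N :
  sumC (fun i => sumC (fun j => f i j) N) M = sumC (fun j => sumC (fun i => f i j) M) N.
Proof. induction M; simpl; [now rewrite sumC_zero|]. now rewrite IHM, <- sumC_plus. Qed.

Lemma sumC_conj f N : Cconj (sumC f N) = sumC (fun i => Cconj (f i)) N.
Proof. induction N; simpl; [|rewrite <- IHN]; apply injective_projections; simpl; lra. Qed.

Lemma sumC_fst f N : fst (sumC f N) = sumR (fun i => fst (f i)) N.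
Proof. induction N; simpl; auto. now rewrite IHN. Qed.

Lemma sumC_RtoC f N : sumC (fun i => RtoC (f i)) N = RtoC (sumR f N).
Proof. induction N; simpl; [|rewrite IHN]; auto; apply injective_projections; simpl; lra. Qed.

Lemma sumC_delta q (k : nat) (g : nat -> C) : (k < q)%nat ->
  sumC (fun r => if (k =? r)%nat then g r else RtoC 0) q = g k.
Proof.
  intros H. induction q; [lia|]. simpl.
  destruct (Nat.eq_dec k q) as [->|Hk].
  - rewrite Nat.eqb_refl, (sumC_ext _ (fun _ => RtoC 0)), sumC_zero.
    + apply injective_projections; simpl; lra.
    + intros i Hi. destruct (Nat.eqb_spec q i); [lia|auto].
  - rewrite IHq by lia. destruct (Nat.eqb_spec k q); [lia|].
    apply injective_projections; simpl; lra.
Qed.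

Lemma sum_n_sumC (f : nat -> C) K : sum_n f K = sumC f (S K).
Proof.
  induction K; [rewrite sum_O; simpl; apply injective_projections; simpl; lra|].
  now rewrite sum_Sn, IHK.
Qed.

Lemma Cconj_mult x y : Cconj (Cmult x y) = Cmult (Cconj x) (Cconj y).
Proof. apply injective_projections; simpl; ring. Qed.

Definition sumC_list (h : nat -> C) (l : list nat) : C :=
  fold_right (fun r acc => Cplus (h r) acc) (RtoC 0) l.

Lemma sumC_list_app h l1 l2 : sumC_list h (l1 ++ l2) = Cplus (sumC_list h l1) (sumC_list h l2).
Proof. induction l1; simpl; [|rewrite IHl1]; apply injective_projections; simpl; lra. Qed.

Lemma sumC_seq h N : sumC h N = sumC_list h (seq 0 N).
Proof.
  induction N; auto. rewrite seq_S, sumC_list_app. simpl. rewrite IHN.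
  apply injective_projections; simpl; lra.
Qed.

Lemma sumC_list_perm h l l' : Permutation l l' -> sumC_list h l = sumC_list h l'.
Proof.
  induction 1; simpl; auto; [now rewrite IHPermutation| |congruence].
  apply injective_projections; simpl; lra.
Qed.

Lemma sumC_list_map h s l : sumC_list h (map s l) = sumC_list (fun r => h (s r)) l.
Proof. induction l; simpl; auto. now rewrite IHl. Qed.

Lemma fold_sum_ext (P Q : (nat -> C) -> R) L : List.Forall (fun g => P g = Q g) L ->
  fold_right (fun g acc => P g + acc) 0 L = fold_right (fun g acc => Q g + acc) 0 L.
Proof. induction 1; simpl; auto. now rewrite H, IHForall. Qed.

Module PrimeFacts.
Import ssreflect ssrfun ssrbool eqtype ssrnat div prime cyclic.
Local Open Scope nat_scope.

Lemma expn_pow m n : expn m n = Nat.pow m n.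
Proof. elim: n => [|n IH] //=. by rewrite expnS IH multE. Qed.

Lemma divide_dvdn d m : Nat.divide d m <-> is_true (d %| m).
Proof.
split=> [[k ->]|/dvdnP [k ->]]; [apply/dvdnP|]; exists k; by rewrite multE.
Qed.

Lemma prime_ge2 q : prime.prime q = true -> (2 <= q)%coq_nat.
Proof. by move=> /prime_gt1 /leP. Qed.

Lemma prime_divisors q : prime.prime q = true ->
  forall d, Nat.divide d q -> d = 1 \/ d = q.
Proof.
move=> Hq d /divide_dvdn. case/primeP: (Hq : is_true (prime q)) => _ H2.
by move=> /H2 /orP [/eqP ->|/eqP ->]; [left|right].
Qed.

Lemma fermat_little q n : prime.prime q = true -> ~ Nat.divide q n ->
  exists k, Nat.pow n (Nat.sub q 1) = Nat.add 1 (Nat.mul k q).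
Proof.
move=> Hq Hn.
have cop : coprime n q.
  by rewrite coprime_sym prime_coprime //; apply/negP => /divide_dvdn.
have := Euler_exp_totient cop. rewrite totient_prime // => E.
have n0 : 0 < n.
  by case: n Hn cop E => //= _; rewrite /coprime gcd0n => /eqP Eq; subst.
have h1 : 1 <= n ^ q.-1 by rewrite expn_gt0 n0.
have : (n ^ q.-1 == 1 %[mod q]) by apply/eqP.
rewrite eqn_mod_dvd // => /dvdnP [k Hk]. exists k.
have -> : Nat.sub q 1 = q.-1 by lia.
move/leP: h1 => h1. move: Hk h1. rewrite -multE -minusE expn_pow. lia.
Qed.

Lemma totient_of_prime q : prime.prime q = true -> prime.totient q = Nat.sub q 1.
Proof. move=> Hq. rewrite totient_prime //. lia. Qed.
End PrimeFacts.

(** * Dirichlet characters modulo a prime *)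

Section PrimeModulus.
Variable q : nat.
Hypothesis q_prime : prime.prime q = true.

Lemma q_ge2 : (2 <= q)%nat.
Proof. exact (PrimeFacts.prime_ge2 q q_prime). Qed.

Lemma gcd_q_1_iff n : Nat.gcd n q = 1%nat <-> ~ Nat.divide q n.
Proof.
  assert (Hq2 := q_ge2). split.
  - intros H D. assert (Hd : Nat.divide q (Nat.gcd n q))
      by (apply Nat.gcd_greatest; auto; apply Nat.divide_refl).
    rewrite H in Hd. apply Nat.divide_1_r in Hd. lia.
  - intros H. destruct (PrimeFacts.prime_divisors q q_prime (Nat.gcd n q)) as [E|E];
      auto using Nat.gcd_divide_r.
    exfalso; apply H. rewrite <- E. apply Nat.gcd_divide_l.
Qed.

Lemma prime_divide_mul a b : Nat.divide q (a * b) -> Nat.divide q a \/ Nat.divide q b.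
Proof.
  intros H. destruct (PrimeFacts.prime_divisors q q_prime (Nat.gcd q a)) as [E|E];
    [apply Nat.gcd_divide_l| |].
  - right. eapply Nat.gauss; eauto.
  - left. rewrite <- E. apply Nat.gcd_divide_r.
Qed.

Lemma divide_q_iff_mod n : Nat.divide q n <-> (n mod q = 0)%nat.
Proof. rewrite Nat.Lcm0.mod_divide. tauto. Qed.

Lemma divide_q_sub x y : (x <= y)%nat -> (x mod q = y mod q)%nat -> Nat.divide q (y - x).
Proof.
  intros Hxy E. exists (y / q - x / q)%nat.
  rewrite Nat.mul_sub_distr_r. pose proof (Nat.div_mod_eq x q). pose proof (Nat.div_mod_eq y q).
  rewrite (Nat.mul_comm (y/q)), (Nat.mul_comm (x/q)). lia.
Qed.

Lemma mul_mod_q_inj a r1 r2 : ~ Nat.divide q a -> (r1 < q)%nat -> (r2 < q)%nat ->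
  ((a * r1) mod q = (a * r2) mod q)%nat -> r1 = r2.
Proof.
  intros Ha H1 H2 E.
  assert (W : forall u v, (u <= v)%nat -> (v < q)%nat ->
             ((a * u) mod q = (a * v) mod q)%nat -> u = v).
  { intros u v Huv Hv Euv. apply divide_q_sub in Euv; [|nia].
    rewrite <- Nat.mul_sub_distr_l in Euv.
    destruct (prime_divide_mul _ _ Euv) as [D|D]; [contradiction|].
    destruct (Nat.eq_dec (v - u) 0); [lia|]. apply Nat.divide_pos_le in D; lia. }
  destruct (Nat.le_ge_cases r1 r2); [|symmetry]; apply W; auto.
Qed.

Lemma mul_mod_q_perm a : ~ Nat.divide q a ->
  Permutation (map (fun r => (a * r) mod q)%nat (seq 0 q)) (seq 0 q).
Proof.
  intros Ha. pose proof q_ge2. apply NoDup_Permutation_bis.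
  - apply NoDup_map_NoDup_ForallPairs; [|apply seq_NoDup].
    intros x y Hx Hy E. apply in_seq in Hx, Hy. eapply mul_mod_q_inj; eauto; lia.
  - now rewrite length_map.
  - intros x Hx. apply in_map_iff in Hx as [r [<- _]]. apply in_seq.
    split; [lia|]. apply Nat.mod_upper_bound. lia.
Qed.

Lemma mul_mod_q_surj a t : ~ Nat.divide q a ->
  exists d, (d < q)%nat /\ ((d * a) mod q = t mod q)%nat.
Proof.
  intros Ha. pose proof q_ge2.
  assert (Ht : In (t mod q) (seq 0 q)) by (apply in_seq; split; [lia|apply Nat.mod_upper_bound; lia]).
  rewrite <- (Permutation_in' eq_refl (mul_mod_q_perm a Ha)) in Ht.
  apply in_map_iff in Ht as [d [E Hd]]. apply in_seq in Hd.
  exists d. split; [lia|]. now rewrite Nat.mul_comm.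
Qed.

Lemma sumC_mul_mod_q a h : ~ Nat.divide q a ->
  sumC (fun r => h ((a * r) mod q)%nat) q = sumC h q.
Proof.
  intros Ha. rewrite !sumC_seq, <- (sumC_list_perm h _ _ (mul_mod_q_perm a Ha)).
  now rewrite sumC_list_map.
Qed.

(* Multiplying the variable by a unit [a] with [g a <> 1] rescales the sum by [g a]. *)
Lemma sum_multiplicative_zero (g : nat -> C) a :
  (forall m n, g (m * n)%nat = Cmult (g m) (g n)) ->
  (forall n, g n = g (n mod q)%nat) ->
  ~ Nat.divide q a -> g a <> RtoC 1 -> sumC g q = RtoC 0.
Proof.
  intros Hm Hp Ha Hg.
  assert (E : Cmult (Cminus (RtoC 1) (g a)) (sumC g q) = RtoC 0).
  { assert (Hs : sumC g q = Cmult (g a) (sumC g q)).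
    { rewrite <- (sumC_mul_mod_q a g Ha) at 1. rewrite <- sumC_scal.
      apply sumC_ext. intros i _. rewrite <- Hp. apply Hm. }
    transitivity (Cminus (sumC g q) (Cmult (g a) (sumC g q))); [ring|].
    rewrite <- Hs. ring. }
  assert (Hne : Cminus (RtoC 1) (g a) <> RtoC 0).
  { intros E0. apply Hg.
    replace (g a) with (Cminus (RtoC 1) (Cminus (RtoC 1) (g a))) by ring.
    rewrite E0. ring. }
  rewrite <- (Cmult_1_l (sumC g q)), <- (Cinv_l _ Hne), <- Cmult_assoc, E. ring.
Qed.

Section Character.
Variable chi : nat -> C.
Hypothesis chi_char : dirichlet_char q chi.

Lemma chi_1 : chi 1%nat = RtoC 1.
Proof. apply chi_char. Qed.

Lemma chi_mul m n : chi (m * n)%nat = Cmult (chi m) (chi n).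
Proof. apply chi_char. Qed.

Lemma chi_add_mul_q n k : chi (n + k * q)%nat = chi n.
Proof.
  induction k; [now rewrite Nat.add_0_r|].
  replace (n + S k * q)%nat with (n + k * q + q)%nat by lia.
  destruct chi_char as [_ [_ [H _]]]. now rewrite H.
Qed.

Lemma chi_mod n : chi n = chi (n mod q)%nat.
Proof.
  rewrite (Nat.div_mod_eq n q) at 1. rewrite Nat.add_comm, Nat.mul_comm. apply chi_add_mul_q.
Qed.

Lemma chi_eq0_iff n : chi n = RtoC 0 <-> Nat.divide q n.
Proof.
  destruct chi_char as [_ [_ [_ H]]]. rewrite H, gcd_q_1_iff. tauto.
Qed.

Lemma chi_0 : chi 0%nat = RtoC 0.
Proof. apply chi_eq0_iff, Nat.divide_0_r. Qed.

Lemma chi_pow c k : chi (c ^ k)%nat = pow_n (chi c) k.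
Proof. induction k; simpl; [apply chi_1|]. now rewrite chi_mul, IHk. Qed.

Lemma Cmod_chi_coprime n : ~ Nat.divide q n -> Cmod (chi n) = 1.
Proof.
  intros Hn. destruct (PrimeFacts.fermat_little q n q_prime Hn) as [k Hk].
  assert (E : Cmod (chi n) ^ (q - 1) = 1).
  { rewrite <- Cmod_1, <- chi_1, <- (chi_add_mul_q 1 k), <- Hk.
    clear Hk. induction (q - 1)%nat as [|m IHm]; simpl; [now rewrite chi_1, Cmod_1|].
    now rewrite chi_mul, Cmod_mult, IHm. }
  assert (Hq1 : (0 < q - 1)%nat) by (pose proof q_ge2; lia).
  pose proof (Cmod_ge_0 (chi n)) as Hnn.
  destruct (Rtotal_order (Cmod (chi n)) 1) as [L|[L|L]]; auto.
  - pose proof (pow_lt_1_compat (Cmod (chi n)) (q - 1) (conj Hnn L) Hq1). lra.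
  - pose proof (Rlt_pow_R1 (Cmod (chi n)) (q - 1) L Hq1). lra.
Qed.

Lemma chi_mul_conj n : ~ Nat.divide q n -> Cmult (chi n) (Cconj (chi n)) = RtoC 1.
Proof.
  intros Hn. rewrite <- Cmod2_conj, Cmod_chi_coprime by auto.
  apply injective_projections; simpl; lra.
Qed.

End Character.

Definition inner (u v : nat -> C) : C := sumC (fun r => Cmult (u r) (Cconj (v r))) q.

Lemma inner_distinct_chars chi psi : dirichlet_char q chi -> dirichlet_char q psi ->
  (exists n, chi n <> psi n) -> inner chi psi = RtoC 0.
Proof.
  intros Hc Hp [n Hn]. unfold inner.
  assert (Hq : ~ Nat.divide q n).
  { intros D. apply Hn. now rewrite (proj2 (chi_eq0_iff chi Hc n) D), (proj2 (chi_eq0_iff psi Hp n) D). }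
  apply (sum_multiplicative_zero _ n); auto.
  - intros a b. rewrite !chi_mul, Cconj_mult by auto. ring.
  - intros m. now rewrite (chi_mod chi Hc m), (chi_mod psi Hp m) at 1.
  - intros E. apply Hn. pose proof (chi_mul_conj psi Hp n Hq) as Hpsi.
    transitivity (Cmult (Cmult (chi n) (Cconj (psi n))) (psi n)); [|rewrite E; ring].
    transitivity (Cmult (chi n) (Cmult (psi n) (Cconj (psi n)))); [rewrite Hpsi|]; ring.
Qed.

Lemma inner_char_self chi : dirichlet_char q chi -> inner chi chi = RtoC (INR (q - 1)).
Proof.
  intros Hc. unfold inner.
  transitivity (sumC (fun r => RtoC (if (r =? 0)%nat then 0 else 1)) q).
  - apply sumC_ext. intros i Hi. destruct (Nat.eqb_spec i 0) as [->|Hi0].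
    + rewrite (chi_0 chi Hc). apply injective_projections; simpl; ring.
    + apply chi_mul_conj; auto. intros D. apply Nat.divide_pos_le in D; lia.
  - rewrite sumC_RtoC. f_equal. pose proof q_ge2.
    destruct q as [|q']; [lia|]. clear. simpl. rewrite Nat.sub_0_r.
    induction q'; [simpl; lra|]. cbn [sumR]. rewrite IHq', S_INR. simpl. lra.
Qed.

Lemma sum_nonprincipal_char chi : dirichlet_char q chi ->
  ~ (forall n, chi n = principal_char q n) -> sumC chi q = RtoC 0.
Proof.
  intros Hc Hn. destruct (not_all_ex_not _ _ Hn) as [n E]. unfold principal_char in E.
  assert (Hq : ~ Nat.divide q n).
  { intros D. apply E. rewrite (proj2 (chi_eq0_iff chi Hc n) D).
    destruct (Nat.eqb_spec (Nat.gcd n q) 1) as [G|G]; auto.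
    now apply gcd_q_1_iff in G. }
  apply (sum_multiplicative_zero _ n); auto using chi_mul, chi_mod.
  now rewrite (proj2 (gcd_q_1_iff n) Hq) in E.
Qed.

Lemma inner_sub_scal_l a v w lam :
  inner (fun r => Cminus (a r) (Cmult lam (v r))) w = Cminus (inner a w) (Cmult lam (inner v w)).
Proof. unfold inner. rewrite <- sumC_scal, <- sumC_minus. apply sumC_ext; intros; ring. Qed.

Lemma inner_conj u v : inner v u = Cconj (inner u v).
Proof.
  unfold inner. rewrite sumC_conj. apply sumC_ext; intros.
  apply injective_projections; simpl; ring.
Qed.

Lemma inner_sub_scal_self a v lam :
  inner (fun r => Cminus (a r) (Cmult lam (v r))) (fun r => Cminus (a r) (Cmult lam (v r)))
  = Cplus (Cminus (Cminus (inner a a) (Cmult (Cconj lam) (inner a v)))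
                            (Cmult lam (inner v a)))
                    (Cmult (Cmult lam (Cconj lam)) (inner v v)).
Proof.
  unfold inner. rewrite <- !sumC_scal, <- !sumC_minus, <- sumC_plus. apply sumC_ext; intros.
  apply injective_projections; simpl; ring.
Qed.

(* Induction on [L]: subtracting from [a] its projection on the head of [L] leaves
   the inner products with the other members unchanged. *)
Lemma bessel (N : R) : 0 < N -> forall L,
  ForallOrdPairs (fun g h => inner g h = RtoC 0) L ->
  List.Forall (fun g => inner g g = RtoC N) L ->
  forall a, fold_right (fun g acc => Cmod (inner a g) ^ 2 + acc) 0 L <= N * fst (inner a a).
Proof.
  intros HN L. induction L as [|v L IH]; intros Ho Hn a; cbn [fold_right].
  - unfold inner. rewrite sumC_fst. apply Rmult_le_pos; [lra|].
    apply sumR_nonneg. intros. simpl. nra.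
  - inversion Ho as [|v' L' Hv Ho']; subst. inversion Hn as [|v' L' Hvv Hn']; subst.
    set (s := inner a v). set (lam := Cmult s (RtoC (/ N))).
    set (a' := fun r => Cminus (a r) (Cmult lam (v r))).
    assert (E1 : fold_right (fun g acc => Cmod (inner a g) ^ 2 + acc) 0 L
               = fold_right (fun g acc => Cmod (inner a' g) ^ 2 + acc) 0 L).
    { apply fold_sum_ext. eapply Forall_impl; [|exact Hv]. intros g Hg. simpl in Hg.
      unfold a'. rewrite inner_sub_scal_l, Hg. do 2 f_equal.
      apply injective_projections; simpl; ring. }
    rewrite E1. specialize (IH Ho' Hn' a').
    assert (E2 : fst (inner a' a') = fst (inner a a) - Cmod s ^ 2 / N).
    { unfold a'. rewrite inner_sub_scal_self, (inner_conj a v). fold s. rewrite Hvv. unfold lam.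
      unfold Cmod. destruct s as [s1 s2]. simpl fst; simpl snd.
      rewrite pow2_sqrt by nra. simpl. field. lra. }
    rewrite E2 in IH. assert (N * (Cmod s ^ 2 / N) = Cmod s ^ 2) by (field; lra). nra.
Qed.

End PrimeModulus.

Lemma sumR_le_count (P : nat -> bool) g G N : (forall n, P n = true -> g n <= G) ->
  sumR (fun n => if P n then g n else 0) N <= G * sumR (fun n => if P n then 1 else 0) N.
Proof.
  intros H. rewrite <- sumR_scal. apply sumR_le. intros i _.
  destruct (P i) eqn:E; [rewrite Rmult_1_r; auto|lra].
Qed.

(* Invariant: the [k]-th member of the [d]-spaced set is at least [lo + (k - 1) d]. *)
Lemma count_spaced_le (P : nat -> bool) (d : nat) lo hi N : (1 <= d)%nat ->
  0 <= (hi - lo) / INR d + 1 ->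
  (forall n, P n = true -> lo <= INR n <= hi) ->
  (forall m n, P m = true -> P n = true -> (m < n)%nat -> (m + d <= n)%nat) ->
  sumR (fun n => if P n then 1 else 0) N <= (hi - lo) / INR d + 1.
Proof.
  intros Hd Hpos HP Hs.
  assert (Hdr : 1 <= INR d) by (apply (le_INR 1); auto).
  assert (Inv : forall N, sumR (fun n => if P n then 1 else 0) N = 0 \/
    exists m, (m < N)%nat /\ P m = true /\
      (sumR (fun n => if P n then 1 else 0) N - 1) * INR d <= INR m - lo).
  { induction N0 as [|N0 IH]; [now left|]. simpl. destruct (P N0) eqn:E.
    - right. exists N0. split; [lia|split; auto].
      destruct IH as [Z|[m [H1 [H2 H3]]]].
      + rewrite Z. specialize (HP N0 E). lra.
      + pose proof (le_INR _ _ (Hs m N0 H2 E H1)) as Hle. rewrite plus_INR in Hle. nra.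
    - rewrite Rplus_0_r. destruct IH as [Z|[m [H1 [H2 H3]]]]; [now left|].
      right. exists m. split; [lia|auto]. }
  destruct (Inv N) as [Z|[m [H1 [H2 H3]]]]; [now rewrite Z|].
  specialize (HP m H2). apply (Rmult_le_reg_r (INR d)); [lra|].
  unfold Rdiv. rewrite Rmult_plus_distr_r, Rmult_assoc, Rinv_l by lra. nra.
Qed.

Definition upto (T : R) (n : nat) : bool :=
  ((1 <=? n)%nat && (if Rle_dec (INR n) T then true else false))%bool.

Lemma upto_bounds T n : upto T n = true -> (1 <= n)%nat /\ INR n <= T.
Proof.
  unfold upto. intros H. apply andb_true_iff in H as [H1 H2].
  destruct (Rle_dec (INR n) T); [|discriminate]. now apply Nat.leb_le in H1.
Qed.

Lemma count_upto_le (T : R) N : 0 <= T -> sumR (fun n => if upto T n then 1 else 0) N <= T.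
Proof.
  intros HT.
  enough (C : sumR (fun n => if upto T n then 1 else 0) N <= (T - 1) / INR 1 + 1)
    by (simpl INR in C; lra).
  apply count_spaced_le; [lia|simpl; lra| |intros; lia].
  intros n Hn. apply upto_bounds in Hn as [Hn1 Hn]. split; auto. apply (le_INR 1); auto.
Qed.

Lemma sumR_le_of_at_most_one (P : nat -> bool) g G N : 0 <= G ->
  (forall m n, P m = true -> P n = true -> (m < n)%nat -> False) ->
  (forall n, P n = true -> g n <= G) ->
  sumR (fun n => if P n then g n else 0) N <= G.
Proof.
  intros HG H1 H2. induction N; simpl; [lra|]. destruct (P N) eqn:E; [|lra].
  rewrite sumR_vanish; [specialize (H2 N E); lra|].
  intros i Hi. destruct (P i) eqn:E2; auto. exfalso; exact (H1 i N E2 E Hi).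
Qed.

Lemma sumR_sq_le0 U Q : sumR (fun r => U r ^ 2) Q <= 0 -> forall i, (i < Q)%nat -> U i = 0.
Proof.
  induction Q; intros H i Hi; [lia|]. cbn [sumR] in H.
  assert (0 <= sumR (fun r => U r ^ 2) Q) by (apply sumR_nonneg; intros; apply pow2_ge_0).
  pose proof (pow2_ge_0 (U Q)).
  destruct (Nat.eq_dec i Q) as [->|Hne]; [nra|apply IHQ; [lra|lia]].
Qed.

Lemma sumR_cauchy_schwarz (U w : nat -> R) Q B b : 0 <= B -> 0 <= b ->
  sumR (fun r => U r ^ 2) Q <= B ^ 2 -> sumR (fun r => w r ^ 2) Q <= b ^ 2 ->
  sumR (fun r => U r * w r) Q <= B * b.
Proof.
  intros HB Hb HU Hw.
  destruct (Req_dec B 0) as [->|HB0].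
  { rewrite sumR_vanish; [lra|]. intros i Hi. rewrite (sumR_sq_le0 U Q) by (auto; lra). ring. }
  destruct (Req_dec b 0) as [->|Hb0].
  { rewrite sumR_vanish; [lra|]. intros i Hi. rewrite (sumR_sq_le0 w Q) by (auto; lra). ring. }
  (* AM-GM with weight l = b / B: 2 U w <= l U^2 + w^2 / l *)
  set (l := b / B). assert (Hl : 0 < l) by (unfold l; apply Rdiv_lt_0_compat; lra).
  assert (H2 : 2 * sumR (fun r => U r * w r) Q <= sumR (fun r => l * U r ^ 2 + w r ^ 2 / l) Q).
  { rewrite <- sumR_scal. apply sumR_le. intros i _.
    assert (0 <= (l * U i - w i) ^ 2 / l) by (apply Rdiv_le_0_compat; [apply pow2_ge_0|lra]).
    replace ((l * U i - w i) ^ 2 / l) with (l * U i ^ 2 + w i ^ 2 / l - 2 * (U i * w i)) in H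
      by (field; lra). lra. }
  rewrite sumR_plus, sumR_scal in H2.
  assert (Hd : sumR (fun r => w r ^ 2 / l) Q = sumR (fun r => w r ^ 2) Q * (B / b)).
  { rewrite Rmult_comm, <- sumR_scal. apply sumR_ext. intros. unfold l. field. lra. }
  rewrite Hd in H2.
  assert (l * B ^ 2 = B * b) by (unfold l; field; lra).
  assert (0 < B / b) by (apply Rdiv_lt_0_compat; lra).
  assert (b ^ 2 * (B / b) = B * b) by (field; lra).
  assert (l * sumR (fun r => U r ^ 2) Q <= l * B ^ 2) by (apply Rmult_le_compat_l; lra).
  assert (sumR (fun r => w r ^ 2) Q * (B / b) <= b ^ 2 * (B / b)) by (apply Rmult_le_compat_r; lra).
  lra.
Qed.

Lemma sumR_minkowski (v : nat -> nat -> R) (beta : nat -> R) M Q :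
  (forall c, 0 <= beta c) ->
  (forall c, (c < M)%nat -> sumR (fun r => (v c r) ^ 2) Q <= (beta c) ^ 2) ->
  sumR (fun r => (sumR (fun c => v c r) M) ^ 2) Q <= (sumR beta M) ^ 2.
Proof.
  intros Hb H. induction M.
  - cbn [sumR]. rewrite sumR_vanish; [lra|]. intros; ring.
  - cbn [sumR].
    assert (IH : sumR (fun r => sumR (fun c => v c r) M ^ 2) Q <= sumR beta M ^ 2)
      by (apply IHM; intros; apply H; lia).
    assert (HM : sumR (fun r => v M r ^ 2) Q <= beta M ^ 2) by (apply H; lia).
    assert (0 <= sumR beta M) by (apply sumR_nonneg; intros; apply Hb).
    pose proof (sumR_cauchy_schwarz (fun r => sumR (fun c => v c r) M) (fun r => v M r) Q
                  (sumR beta M) (beta M) H0 (Hb M) IH HM).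
    replace (sumR (fun r => (sumR (fun c => v c r) M + v M r) ^ 2) Q) with
      (sumR (fun r => sumR (fun c => v c r) M ^ 2) Q
       + 2 * sumR (fun r => sumR (fun c => v c r) M * v M r) Q + sumR (fun r => v M r ^ 2) Q).
    + nra.
    + rewrite <- sumR_scal, <- !sumR_plus. apply sumR_ext; intros; ring.
Qed.

(* Telescoping: 1 / c^3 <= 2 / c^2 - 2 / (c + 1)^2. *)
Lemma sumR_inv_cube_tail m N : (1 <= m)%nat ->
  sumR (fun c => if (m <=? c)%nat then / (INR c ^ 3) else 0) N <= 2 / (INR m ^ 2).
Proof.
  intros Hm. assert (Hmr : 1 <= INR m) by (apply (le_INR 1); auto).
  set (F := fun c => if (m <=? c)%nat then / (INR c ^ 3) else 0).
  assert (Below : forall N, (N <= m)%nat -> sumR F N = 0).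
  { intros N0 H. apply sumR_vanish. intros i Hi. unfold F. destruct (Nat.leb_spec m i); auto; lia. }
  assert (G : forall N, (m <= N)%nat -> sumR F N <= 2 / INR m ^ 2 - 2 / INR N ^ 2).
  { intros N0 H. induction H; [rewrite Below by lia; lra|].
    cbn [sumR]. unfold F at 2. destruct (Nat.leb_spec m m0); [|lia].
    assert (Hr : 1 <= INR m0) by (apply (le_INR 1); lia). rewrite S_INR.
    enough (/ INR m0 ^ 3 <= 2 / INR m0 ^ 2 - 2 / (INR m0 + 1) ^ 2) by lra.
    set (y := INR m0) in *. unfold Rdiv.
    assert (0 < y ^ 3) by (apply pow_lt; lra). assert (0 < (y + 1) ^ 2) by (apply pow_lt; lra).
    apply Rmult_le_reg_r with (y ^ 3 * (y + 1) ^ 2); [nra|].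
    field_simplify; try lra. nra. }
  destruct (Nat.le_gt_cases m N) as [HN|HN].
  - specialize (G N HN).
    assert (0 <= 2 / INR N ^ 2) by (apply Rdiv_le_0_compat; [lra|apply pow_lt, (lt_INR 0); lia]).
    lra.
  - rewrite Below by lia. apply Rdiv_le_0_compat; [lra|apply pow_lt; lra].
Qed.

(** * Sums of monotone weights over residue classes *)

Section ResidueClasses.
Variable q : nat.
Hypothesis q_prime : prime.prime q = true.

Lemma mod_shift X Y r r' : (r < q)%nat -> (r' < q)%nat -> ((X + Y) mod q = r)%nat ->
  (Y mod q = (r + q - r') mod q)%nat -> (X mod q = r')%nat.
Proof.
  intros Hr Hr' E1 E2. pose proof (q_ge2 q q_prime).
  rewrite Nat.Div0.add_mod, E2, <- Nat.Div0.add_mod, <- Nat.Div0.add_mod_idemp_l in E1.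
  assert (Hx0 : (X mod q < q)%nat) by (apply Nat.mod_upper_bound; lia).
  pose proof (Nat.div_mod_eq (X mod q + (r + q - r')) q) as E. rewrite E1 in E.
  destruct ((X mod q + (r + q - r')) / q)%nat as [|[|k]]; nia.
Qed.

Lemma same_class_spacing e m n r : ~ Nat.divide q e ->
  ((m * e) mod q = r)%nat -> ((n * e) mod q = r)%nat -> (m < n)%nat -> (m + q <= n)%nat.
Proof.
  intros He E1 E2 Hmn.
  assert (D : Nat.divide q (n * e - m * e)) by (apply divide_q_sub; [nia|congruence]).
  rewrite <- Nat.mul_sub_distr_r in D.
  destruct (prime_divide_mul q q_prime _ _ D) as [D'|D']; [|contradiction].
  apply Nat.divide_pos_le in D'; lia.
Qed.

Section Shift.
Variables (e : nat) (J : nat -> bool) (K : nat) (g : nat -> R) (G : R).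
Hypothesis e_coprime : ~ Nat.divide q e.
Hypothesis J_convex : forall m n k, J m = true -> J n = true -> (m <= k <= n)%nat -> J k = true.
Hypothesis g_antitone : forall m n, J m = true -> J n = true -> (m <= n)%nat -> g n <= g m.
Hypothesis g_nonneg : forall n, J n = true -> 0 <= g n.
Hypothesis g_le : forall n, J n = true -> g n <= G.

Definition class_sum (r : nat) : R :=
  sumR (fun n => if (((n * e) mod q =? r)%nat && J n)%bool then g n else 0) (S K).

Lemma class_sum_nonneg_terms r n :
  0 <= (if (((n * e) mod q =? r)%nat && J n)%bool then g n else 0).
Proof. destruct ((n * e) mod q =? r)%nat, (J n) eqn:E; simpl; auto; lra. Qed.

Section Shift_by.
Variables (r d : nat).
Hypothesis d_lt_q : (d < q)%nat.

Definition in_class (n : nat) : bool := (((n * e) mod q =? r)%nat && J n)%bool.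
Definition shift_stays (n : nat) : bool := ((d <=? n)%nat && J (n - d)%nat)%bool.

(* Two members of the class are [q > d] apart, so by convexity of [J] only the first
   one can leave [J] under [n |-> n - d]. *)
Lemma class_sum_unshifted_le : 0 <= G ->
  sumR (fun n => if (in_class n && negb (shift_stays n))%bool then g n else 0) (S K) <= G.
Proof.
  intros HG. apply sumR_le_of_at_most_one; auto.
  - intros m n Hm Hn Hmn. unfold in_class, shift_stays in Hm, Hn.
    apply andb_true_iff in Hm as [Hm _]. apply andb_true_iff in Hm as [Hm1 Hm2].
    apply andb_true_iff in Hn as [Hn Hn3]. apply andb_true_iff in Hn as [Hn1 Hn2].
    apply Nat.eqb_eq in Hm1, Hn1.
    pose proof (same_class_spacing e m n r e_coprime Hm1 Hn1 Hmn).
    apply negb_true_iff, andb_false_iff in Hn3 as [D|D].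
    + apply Nat.leb_gt in D. lia.
    + rewrite (J_convex m n (n - d)%nat Hm2 Hn2) in D; [discriminate|lia].
  - intros n Hn. apply g_le. unfold in_class in Hn.
    apply andb_true_iff in Hn as [Hn _]. apply andb_true_iff in Hn; tauto.
Qed.

(* With [d e = r - r' (mod q)], [n |-> n - d] maps the class [r] into the class [r']
   and does not decrease [g]. *)
Lemma class_sum_shifted_le r' : (r < q)%nat -> (r' < q)%nat ->
  (d * e) mod q = (r + q - r') mod q ->
  sumR (fun n => if (in_class n && shift_stays n)%bool then g n else 0) (S K) <= class_sum r'.
Proof.
  intros Hr Hr' Hde.
  assert (BelowD : forall i, (i < d)%nat -> (if (in_class i && shift_stays i)%bool then g i else 0) = 0).
  { intros i Hi. unfold shift_stays. destruct (Nat.leb_spec d i); [lia|].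
    now rewrite andb_false_r. }
  destruct (Nat.le_gt_cases d (S K)) as [Hle|Hgt].
  2: { rewrite sumR_vanish by (intros i Hi; apply BelowD; lia).
       apply sumR_nonneg. intros; apply class_sum_nonneg_terms. }
  rewrite (sumR_split (S K) d _ Hle), (sumR_vanish _ d BelowD), Rplus_0_l.
  apply Rle_trans with (sumR (fun n => if (((n * e) mod q =? r')%nat && J n)%bool
                                       then g n else 0) (S K - d)).
  - apply sumR_le. intros i _. unfold in_class, shift_stays.
    destruct (((i + d) * e) mod q =? r)%nat eqn:E1; simpl; [|apply class_sum_nonneg_terms].
    destruct (J (i + d)%nat) eqn:E2; simpl; [|apply class_sum_nonneg_terms].
    destruct (Nat.leb_spec d (i + d)); simpl; [|lia].
    replace (i + d - d)%nat with i by lia.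
    destruct (J i) eqn:E3; [|rewrite andb_false_r; lra].
    apply Nat.eqb_eq in E1. rewrite Nat.mul_add_distr_r in E1.
    rewrite (mod_shift _ _ r r' Hr Hr' E1 Hde), Nat.eqb_refl. simpl.
    apply g_antitone; auto. lia.
  - apply sumR_le_length; [intros; apply class_sum_nonneg_terms|lia].
Qed.

End Shift_by.

Lemma class_sum_shift r r' : (r < q)%nat -> (r' < q)%nat -> 0 <= G ->
  class_sum r <= class_sum r' + G.
Proof.
  intros Hr Hr' HG.
  destruct (mul_mod_q_surj q q_prime e (r + q - r') e_coprime) as [d [Hd Hde]].
  assert (Split : class_sum r =
      sumR (fun n => if (in_class r n && shift_stays d n)%bool then g n else 0) (S K)
    + sumR (fun n => if (in_class r n && negb (shift_stays d n))%bool then g n else 0) (S K)).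
  { unfold class_sum. rewrite <- sumR_plus. apply sumR_ext. intros i _.
    unfold in_class, shift_stays.
    destruct ((i * e) mod q =? r)%nat, (J i), (d <=? i)%nat, (J (i - d)%nat); simpl; lra. }
  pose proof (class_sum_shifted_le r d Hd r' Hr Hr' Hde).
  pose proof (class_sum_unshifted_le r d Hd HG). lra.
Qed.

Lemma class_sum_diff r r' : (r < q)%nat -> (r' < q)%nat -> 0 <= G ->
  Rabs (class_sum r - class_sum r') <= G.
Proof.
  intros Hr Hr' HG. pose proof (class_sum_shift r r' Hr Hr' HG).
  pose proof (class_sum_shift r' r Hr' Hr HG). apply Rabs_le. lra.
Qed.

End Shift.
End ResidueClasses.

Lemma pow_le_reg x y n : 0 <= x -> 0 <= y -> (0 < n)%nat -> x ^ n <= y ^ n -> x <= y.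
Proof.
  intros Hx Hy Hn H. destruct (Rle_dec x y) as [|Hxy]; auto.
  destruct n as [|n]; [lia|].
  assert (y ^ n <= x ^ n) by (apply pow_incr; lra).
  assert (0 <= y ^ n) by (apply pow_le; lra).
  assert (0 < x ^ n) by (apply pow_lt; lra).
  simpl in H. nra.
Qed.

Lemma in_interval_bounds a b lc rc t : in_interval a b lc rc t = true -> a <= t <= b.
Proof.
  unfold in_interval. intros H. apply andb_true_iff in H as [H1 H2].
  destruct lc, rc;
    repeat match goal with _ : context [Rle_dec ?u ?v] |- _ => destruct (Rle_dec u v)
                         | _ : context [Rlt_dec ?u ?v] |- _ => destruct (Rlt_dec u v) end;
    try discriminate; lra.
Qed.

Lemma in_interval_convex a b lc rc u v w :
  in_interval a b lc rc u = true -> in_interval a b lc rc w = true -> u <= v <= w ->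
  in_interval a b lc rc v = true.
Proof.
  unfold in_interval. intros H1 H2 H.
  apply andb_true_iff in H1 as [H1 _]. apply andb_true_iff in H2 as [_ H2].
  apply andb_true_iff. split; [destruct lc|destruct rc];
    repeat match goal with |- context [Rle_dec ?u ?v] => destruct (Rle_dec u v)
                         | |- context [Rlt_dec ?u ?v] => destruct (Rlt_dec u v)
                         | _ : context [Rle_dec ?u ?v] |- _ => destruct (Rle_dec u v)
                         | _ : context [Rlt_dec ?u ?v] |- _ => destruct (Rlt_dec u v) end;
    auto; try discriminate; lra.
Qed.

Lemma Rabs_mobius_le_1 c : Rabs (mobius c) <= 1.
Proof.
  unfold mobius. destruct (c =? 0)%nat; [rewrite Rabs_R0; lra|].
  destruct (forallb _ _); [rewrite pow_1_abs|rewrite Rabs_R0]; lra.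
Qed.

Definition inv_rpow (n : nat) (e : R) : R := / Rpower (INR n) e.

Lemma inv_rpow_pos n e : 0 < inv_rpow n e.
Proof. apply Rinv_0_lt_compat, exp_pos. Qed.

Lemma inv_rpow_antitone e m n : 0 <= e -> (1 <= m)%nat -> (m <= n)%nat ->
  inv_rpow n e <= inv_rpow m e.
Proof.
  intros He Hm Hmn. apply Rinv_le_contravar; [apply exp_pos|].
  apply Rle_Rpower_l; auto. split; [apply (lt_INR 0); lia|apply le_INR; auto].
Qed.

Lemma inv_rpow_le_exponent n e e' : (1 <= n)%nat -> e <= e' -> inv_rpow n e' <= inv_rpow n e.
Proof.
  intros Hn He. apply Rinv_le_contravar; [apply exp_pos|].
  apply Rle_Rpower; auto. apply (le_INR 1); auto.
Qed.

Lemma inv_sqrt_le n (c x : R) : 0 < x -> 0 < c -> (1 <= n)%nat -> x <= INR n * c ^ 6 ->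
  inv_rpow n (1/2) <= c ^ 3 / sqrt x.
Proof.
  intros Hx Hc Hn H. unfold inv_rpow.
  assert (Hn' : 0 < INR n) by (apply (lt_INR 0); lia).
  replace (1/2) with (/2) by field. rewrite Rpower_sqrt by auto.
  assert (0 < sqrt (INR n)) by (apply sqrt_lt_R0; auto).
  assert (0 < sqrt x) by (apply sqrt_lt_R0; auto).
  assert (0 < c ^ 3) by (apply pow_lt; auto).
  assert (sqrt x <= c ^ 3 * sqrt (INR n)).
  { rewrite <- (sqrt_pow2 (c ^ 3 * sqrt (INR n))) by nra. apply sqrt_le_1_alt.
    replace ((c ^ 3 * sqrt (INR n)) ^ 2) with (c ^ 6 * sqrt (INR n) ^ 2) by ring.
    rewrite pow2_sqrt by lra. lra. }
  apply Rmult_le_reg_r with (sqrt x * sqrt (INR n)); [nra|].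
  field_simplify; lra.
Qed.

Definition f_const : R := Rabs (zeta (3/2)) / 2 + Rabs (zeta (2/3)) / 3.

Lemma f_const_nonneg : 0 <= f_const.
Proof. unfold f_const. pose proof (Rabs_pos (zeta (3/2))). pose proof (Rabs_pos (zeta (2/3))). lra. Qed.

Lemma f_decomp n : (1 <= n)%nat ->
  f (INR n) = zeta (3/2) / 2 * inv_rpow n (1/2) + zeta (2/3) / 3 * inv_rpow n (2/3).
Proof.
  intros H. unfold f, inv_rpow.
  assert (0 < Rpower (INR n) (1/2)) by apply exp_pos.
  assert (0 < Rpower (INR n) (2/3)) by apply exp_pos.
  field. lra.
Qed.

Lemma Rabs_f_combination_le u v G : Rabs u <= G -> Rabs v <= G ->
  Rabs (zeta (3/2) / 2 * u + zeta (2/3) / 3 * v) <= f_const * G.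
Proof.
  intros Hu Hv. eapply Rle_trans; [apply Rabs_triang|]. unfold f_const, Rdiv.
  rewrite !Rabs_mult, (Rabs_right (/2)), (Rabs_right (/3)) by lra.
  pose proof (Rabs_pos (zeta (3/2))). pose proof (Rabs_pos (zeta (2/3))).
  assert (Rabs (zeta (3/2)) * / 2 * Rabs u <= Rabs (zeta (3/2)) * / 2 * G)
    by (apply Rmult_le_compat_l; lra).
  assert (Rabs (zeta (2/3)) * / 3 * Rabs v <= Rabs (zeta (2/3)) * / 3 * G)
    by (apply Rmult_le_compat_l; lra).
  lra.
Qed.

Lemma c6_ge1 c : (1 <= c)%nat -> 1 <= INR c ^ 6.
Proof.
  intros H. assert (1 <= INR c) by (apply (le_INR 1); auto).
  replace 1 with (1 ^ 6) by ring. apply pow_incr. lra.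
Qed.

Lemma sumR_cubes_le (T : R) N : 0 <= T ->
  sumR (fun c => if upto T c then INR c ^ 3 else 0) N <= T ^ 4.
Proof.
  intros HT. eapply Rle_trans; [apply (sumR_le_count _ _ (T ^ 3))|].
  - intros n Hn. apply upto_bounds in Hn as [_ Hn]. apply pow_incr. split; auto. apply pos_INR.
  - replace (T ^ 4) with (T ^ 3 * T) by ring.
    apply Rmult_le_compat_l; [apply pow_le; lra|]. now apply count_upto_le.
Qed.

(** * Splitting the sum into residue classes *)

Section Setting.
Variables (x z a b : R) (lc rc : bool) (q K : nat).
Hypothesis x_pos : 0 < x.
Hypothesis q_prime : prime.prime q = true.
Hypothesis z_pos : 0 < z.
Hypothesis z_le : z <= 2 * x.
Hypothesis x_le_a : x <= a.
Hypothesis a_le_b : a <= b.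
Hypothesis b_le : b <= 3 * x.

Definition admissible (c : nat) : bool :=
  ((1 <=? c)%nat && (if Rle_dec (INR c ^ 6) z then true else false))%bool.
Definition in_range (c n : nat) : bool :=
  ((1 <=? n)%nat && in_interval a b lc rc (INR n * INR c ^ 6))%bool.
Definition res (c n : nat) : nat := ((n * c ^ 6) mod q)%nat.
Definition weight (c n : nat) : R :=
  if (admissible c && in_range c n)%bool then mobius c * f (INR n) else 0.

Definition f_class (c r : nat) : R :=
  sumR (fun n => if ((res c n =? r)%nat && in_range c n)%bool then f (INR n) else 0) (S K).
Definition absf_class (c r : nat) : R :=
  sumR (fun n => if ((res c n =? r)%nat && in_range c n)%bool then Rabs (f (INR n)) else 0) (S K).
Definition class_part (c r : nat) : R :=
  sumR (fun n => if (res c n =? r)%nat then weight c n else 0) (S K).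
Definition class_weight (r : nat) : R := sumR (fun c => class_part c r) (S K).

Definition len : R := b - a.
Definition len_q : R := len / INR q.
Definition z6 : R := Rpower z (1/6).
(* [n^(-1/2) <= c^3 / sqrt x] when [x <= n c^6] *)
Definition f_sup (c : nat) : R := INR c ^ 3 / sqrt x.

Lemma q_ge2_R : 2 <= INR q.
Proof. apply (le_INR 2), (q_ge2 q q_prime). Qed.

Lemma len_nonneg : 0 <= len.
Proof. unfold len; lra. Qed.

Lemma len_q_nonneg : 0 <= len_q.
Proof. unfold len_q. apply Rdiv_le_0_compat; [apply len_nonneg|pose proof q_ge2_R; lra]. Qed.

Lemma sqrt_len_q_le_len : sqrt len_q <= sqrt len.
Proof.
  apply sqrt_le_1_alt. unfold len_q. pose proof q_ge2_R. pose proof len_nonneg.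
  apply Rmult_le_reg_r with (INR q); [lra|]. unfold Rdiv. rewrite Rmult_assoc, Rinv_l by lra. nra.
Qed.

Lemma res_lt c n : (res c n < q)%nat.
Proof. unfold res. apply Nat.mod_upper_bound. pose proof (q_ge2 q q_prime). lia. Qed.

Lemma in_range_bounds c n : in_range c n = true -> (1 <= n)%nat /\ a <= INR n * INR c ^ 6 <= b.
Proof.
  unfold in_range. intros H. apply andb_true_iff in H as [H1 H2].
  split; [now apply Nat.leb_le|now apply in_interval_bounds in H2].
Qed.

Lemma in_range_convex c m n k : in_range c m = true -> in_range c n = true ->
  (m <= k <= n)%nat -> in_range c k = true.
Proof.
  intros Hm Hn Hk. unfold in_range in *.
  apply andb_true_iff in Hm as [Hm1 Hm2]. apply andb_true_iff in Hn as [_ Hn2].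
  apply andb_true_iff. split; [apply Nat.leb_le in Hm1; apply Nat.leb_le; lia|].
  apply (in_interval_convex _ _ _ _ _ _ _ Hm2 Hn2).
  assert (0 <= INR c ^ 6) by (apply pow_le, pos_INR).
  assert (INR m <= INR k) by (apply le_INR; lia).
  assert (INR k <= INR n) by (apply le_INR; lia). nra.
Qed.

Lemma f_sup_nonneg c : 0 <= f_sup c.
Proof. unfold f_sup. apply Rdiv_le_0_compat; [apply pow_le, pos_INR|apply sqrt_lt_R0; auto]. Qed.

Lemma inv_rpow_le_f_sup c n e : (1 <= c)%nat -> in_range c n = true -> 1/2 <= e ->
  inv_rpow n e <= f_sup c.
Proof.
  intros Hc H He. destruct (in_range_bounds c n H) as [Hn [Hx _]].
  eapply Rle_trans; [now apply (inv_rpow_le_exponent n (1/2) e)|].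
  apply inv_sqrt_le; [auto|apply (lt_INR 0); lia|auto|lra].
Qed.

Lemma Rabs_f_le c n : (1 <= c)%nat -> in_range c n = true -> Rabs (f (INR n)) <= f_const * f_sup c.
Proof.
  intros Hc H. destruct (in_range_bounds c n H) as [Hn _]. rewrite f_decomp by auto.
  apply Rabs_f_combination_le; rewrite Rabs_right by (apply Rle_ge, Rlt_le, inv_rpow_pos);
    apply inv_rpow_le_f_sup; auto; lra.
Qed.

Lemma z6_pow6 : z6 ^ 6 = z.
Proof.
  unfold z6. rewrite <- Rpower_pow by apply exp_pos. rewrite Rpower_mult.
  replace (1/6 * INR 6) with 1 by (simpl; field). now apply Rpower_1.
Qed.

Lemma z6_pos : 0 < z6.
Proof. apply exp_pos. Qed.

Lemma admissible_le_z6 c : admissible c = true -> (1 <= c)%nat /\ INR c <= z6.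
Proof.
  unfold admissible. intros H. apply andb_true_iff in H as [H1 H2].
  split; [now apply Nat.leb_le|].
  destruct (Rle_dec (INR c ^ 6) z); [|discriminate].
  apply (pow_le_reg _ _ 6); [apply pos_INR|pose proof z6_pos; lra|lia|now rewrite z6_pow6].
Qed.

Lemma class_part_eq c r :
  class_part c r = if admissible c then mobius c * f_class c r else 0.
Proof.
  unfold class_part, weight, f_class. destruct (admissible c).
  - rewrite <- sumR_scal. apply sumR_ext. intros i _.
    destruct (res c i =? r)%nat, (in_range c i); simpl; ring.
  - apply sumR_vanish. intros i _. now destruct (res c i =? r)%nat.
Qed.

Lemma count_in_range c N : (1 <= c)%nat ->
  sumR (fun n => if in_range c n then 1 else 0) N <= len / INR c ^ 6 + 1.
Proof.
  intros Hc. pose proof (c6_ge1 c Hc) as Hc6.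
  assert (Hc0 : INR c <> 0) by (apply not_0_INR; lia).
  replace (len / INR c ^ 6 + 1) with ((b / INR c ^ 6 - a / INR c ^ 6) / INR 1 + 1)
    by (unfold len; simpl INR; field; auto).
  apply count_spaced_le; [lia| | |intros; lia].
  - change (INR 1) with 1. unfold Rdiv. rewrite <- Rmult_minus_distr_r, Rinv_1, Rmult_1_r.
    assert (0 < / INR c ^ 6) by (apply Rinv_0_lt_compat; lra).
    assert (0 <= (b - a) * / INR c ^ 6) by (apply Rmult_le_pos; lra). lra.
  - intros n Hn. apply in_range_bounds in Hn as [_ [Hlo Hhi]].
    split; apply Rmult_le_reg_r with (INR c ^ 6); try lra;
      unfold Rdiv; rewrite Rmult_assoc, Rinv_l by lra; lra.
Qed.

Lemma c6_coprime c : (c ^ 6 mod q)%nat <> 0%nat -> ~ Nat.divide q (c ^ 6).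
Proof. intros D Dv. now apply (divide_q_iff_mod q) in Dv. Qed.

Lemma count_in_class c r N : (1 <= c)%nat -> r <> 0%nat ->
  sumR (fun n => if ((res c n =? r)%nat && in_range c n)%bool then 1 else 0) N
  <= len_q / INR c ^ 6 + 1.
Proof.
  intros Hc Hr. pose proof (c6_ge1 c Hc) as Hc6. pose proof q_ge2_R as Hq.
  assert (Hc0 : INR c <> 0) by (apply not_0_INR; lia).
  replace (len_q / INR c ^ 6 + 1) with ((b / INR c ^ 6 - a / INR c ^ 6) / INR q + 1)
    by (unfold len_q, len; field; split; lra).
  apply count_spaced_le; [pose proof (q_ge2 q q_prime); lia| | |].
  - unfold Rdiv. rewrite <- Rmult_minus_distr_r.
    assert (0 < / INR c ^ 6) by (apply Rinv_0_lt_compat; lra).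
    assert (0 < / INR q) by (apply Rinv_0_lt_compat; lra).
    assert (0 <= (b - a) * / INR c ^ 6) by nra. nra.
  - intros n Hn. apply andb_true_iff in Hn as [_ Hn]. apply in_range_bounds in Hn as [_ [Hlo Hhi]].
    split; apply Rmult_le_reg_r with (INR c ^ 6); try lra;
      unfold Rdiv; rewrite Rmult_assoc, Rinv_l by lra; lra.
  - intros m n Hm Hn Hmn. apply andb_true_iff in Hm as [Hm _]. apply andb_true_iff in Hn as [Hn _].
    apply Nat.eqb_eq in Hm, Hn. unfold res in *.
    apply (same_class_spacing q q_prime (c ^ 6) m n r); auto.
    apply c6_coprime. intros D.
    rewrite Nat.Div0.mul_mod, D, Nat.mul_0_r, Nat.Div0.mod_0_l in Hm. lia.
Qed.

Lemma absf_class_nonneg c r : 0 <= absf_class c r.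
Proof. apply sumR_nonneg. intros i _. destruct (_ && _)%bool; [apply Rabs_pos|lra]. Qed.

Lemma Rabs_f_class_le c r : Rabs (f_class c r) <= absf_class c r.
Proof.
  eapply Rle_trans; [apply sumR_Rabs|]. apply sumR_le. intros i _.
  destruct (_ && _)%bool; [lra|rewrite Rabs_R0; lra].
Qed.

Lemma absf_class_le c r : (1 <= c)%nat -> r <> 0%nat ->
  absf_class c r <= f_const * f_sup c * (len_q / INR c ^ 6 + 1).
Proof.
  intros Hc Hr. eapply Rle_trans; [apply (sumR_le_count _ _ (f_const * f_sup c))|].
  - intros n Hn. apply andb_true_iff in Hn as [_ Hn]. now apply Rabs_f_le.
  - apply Rmult_le_compat_l; [pose proof f_const_nonneg; pose proof (f_sup_nonneg c); nra|].
    now apply count_in_class.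
Qed.

Lemma sum_absf_class c : (1 <= c)%nat ->
  sumR (absf_class c) q <= f_const * f_sup c * (len / INR c ^ 6 + 1).
Proof.
  intros Hc. unfold absf_class. rewrite sumR_swap.
  transitivity (sumR (fun n => if in_range c n then Rabs (f (INR n)) else 0) (S K)).
  - right. apply sumR_ext. intros n _.
    rewrite <- (sumR_delta q (res c n) (fun _ => if in_range c n then Rabs (f (INR n)) else 0))
      by apply res_lt.
    apply sumR_ext. intros r _. now destruct (res c n =? r)%nat, (in_range c n).
  - eapply Rle_trans; [apply (sumR_le_count _ _ (f_const * f_sup c)); intros; now apply Rabs_f_le|].
    apply Rmult_le_compat_l; [pose proof f_const_nonneg; pose proof (f_sup_nonneg c); nra|].
    now apply count_in_range.
Qed.

Lemma f_class_decomp c r : f_class c r =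
  zeta (3/2) / 2 * class_sum q (c ^ 6) (in_range c) K (fun n => inv_rpow n (1/2)) r +
  zeta (2/3) / 3 * class_sum q (c ^ 6) (in_range c) K (fun n => inv_rpow n (2/3)) r.
Proof.
  unfold f_class, class_sum. rewrite <- !sumR_scal, <- sumR_plus. apply sumR_ext. intros n _.
  unfold res. destruct ((n * c ^ 6) mod q =? r)%nat, (in_range c n) eqn:E; simpl; try ring.
  apply in_range_bounds in E as [E _]. now apply f_decomp.
Qed.

(* For [c^6] prime to [q], the class sums of each power [n^-e] differ by at most
   [f_sup c] (they are sums of a monotone function over shifted progressions);
   otherwise only the class [0] is non-empty. *)
Lemma f_class_diff c r : admissible c = true -> r <> 0%nat -> (r < q)%nat ->
  Rabs (f_class c r - f_class c 1) <= f_const * f_sup c.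
Proof.
  intros Hg Hr Hrq. destruct (admissible_le_z6 c Hg) as [Hc _].
  pose proof f_const_nonneg. pose proof (f_sup_nonneg c). pose proof (q_ge2 q q_prime).
  destruct (Nat.eq_dec ((c ^ 6) mod q) 0) as [D|D].
  - assert (Z : forall r', r' <> 0%nat -> f_class c r' = 0).
    { intros r' Hr'. apply sumR_vanish. intros n _. unfold res.
      rewrite Nat.Div0.mul_mod, D, Nat.mul_0_r, Nat.Div0.mod_0_l.
      destruct (Nat.eqb_spec 0 r'); [lia|reflexivity]. }
    rewrite !Z by lia. rewrite Rminus_0_r, Rabs_R0. nra.
  - assert (Diff : forall e, 1/2 <= e ->
      Rabs (class_sum q (c ^ 6) (in_range c) K (fun n => inv_rpow n e) r -
            class_sum q (c ^ 6) (in_range c) K (fun n => inv_rpow n e) 1) <= f_sup c).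
    { intros e He. apply class_sum_diff; auto; try lia.
      - now apply c6_coprime.
      - apply in_range_convex.
      - intros m n Hm Hn Hmn. apply inv_rpow_antitone; [lra| |auto].
        now apply in_range_bounds in Hm.
      - intros n _. apply Rlt_le, inv_rpow_pos.
      - intros n Hn. now apply inv_rpow_le_f_sup. }
    rewrite !f_class_decomp.
    match goal with |- Rabs ?E <= _ =>
      match E with zeta _ / 2 * ?u1 + zeta _ / 3 * ?v1 - (zeta _ / 2 * ?u2 + zeta _ / 3 * ?v2) =>
        replace E with (zeta (3/2) / 2 * (u1 - u2) + zeta (2/3) / 3 * (v1 - v2)) by ring end end.
    apply Rabs_f_combination_le; apply Diff; lra.
Qed.

(** * The mean value of the classes and the two error terms *)

Section Cut.
Variable m : nat.

Definition ref_value : R := sumR (fun c => if (c <=? m)%nat then class_part c 1 else 0) (S K).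
Definition small_part (r : nat) : R :=
  sumR (fun c => if (c <=? m)%nat then class_part c r - class_part c 1 else 0) (S K).
Definition large_part (r : nat) : R :=
  sumR (fun c => if (c <=? m)%nat then 0 else class_part c r) (S K).
Definition centred (r : nat) : R := if (r =? 0)%nat then 0 else class_weight r - ref_value.

Lemma centred_split r : r <> 0%nat -> centred r = small_part r + large_part r.
Proof.
  intros Hr. unfold centred, class_weight, ref_value, small_part, large_part.
  destruct (Nat.eqb_spec r 0); [contradiction|].
  rewrite <- sumR_minus, <- sumR_plus. apply sumR_ext. intros c _.
  destruct (c <=? m)%nat; ring.
Qed.

Lemma Rabs_small_part_le r : r <> 0%nat -> (r < q)%nat ->
  Rabs (small_part r) <= f_const / sqrt x * INR m ^ 4.
Proof.
  intros Hr Hrq. unfold small_part. eapply Rle_trans; [apply sumR_Rabs|].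
  assert (Hsx : 0 < sqrt x) by (apply sqrt_lt_R0; auto). pose proof f_const_nonneg.
  assert (0 <= f_const / sqrt x) by (apply Rdiv_le_0_compat; lra).
  apply Rle_trans with
    (sumR (fun c => f_const / sqrt x * (if upto (INR m) c then INR c ^ 3 else 0)) (S K)).
  - apply sumR_le. intros c _.
    assert (0 <= f_const / sqrt x * (if upto (INR m) c then INR c ^ 3 else 0))
      by (destruct (upto (INR m) c); [apply Rmult_le_pos; auto; apply pow_le, pos_INR|lra]).
    destruct (Nat.leb_spec c m); [|rewrite Rabs_R0; lra].
    rewrite !class_part_eq. destruct (admissible c) eqn:E; [|rewrite Rminus_0_r, Rabs_R0; lra].
    destruct (admissible_le_z6 c E) as [Hc _].
    replace (mobius c * f_class c r - mobius c * f_class c 1)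
      with (mobius c * (f_class c r - f_class c 1)) by ring.
    rewrite Rabs_mult.
    assert (Hu : upto (INR m) c = true).
    { unfold upto. destruct (Nat.leb_spec 1 c); [|lia].
      destruct (Rle_dec (INR c) (INR m)) as [|Hn]; auto. exfalso. apply Hn, le_INR; auto. }
    rewrite Hu. replace (f_const / sqrt x * INR c ^ 3) with (1 * (f_const * f_sup c))
      by (unfold f_sup; field; lra).
    apply Rmult_le_compat; [apply Rabs_pos|apply Rabs_pos|apply Rabs_mobius_le_1|].
    now apply f_class_diff.
  - rewrite sumR_scal. apply Rmult_le_compat_l; auto. apply sumR_cubes_le, pos_INR.
Qed.

Definition large_term (c r : nat) : R :=
  if ((m <? c)%nat && admissible c && negb (r =? 0)%nat)%bool then absf_class c r else 0.

(* Bound for the l^2 norm over [r] of the [c]-th summand, from [||A||_2^2 <= max A * sum A]. *)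
Definition large_bound (c : nat) : R :=
  if ((m <? c)%nat && admissible c)%bool
  then f_const * f_sup c * (sqrt len_q / INR c ^ 3 + 1) * (sqrt len / INR c ^ 3 + 1) else 0.

Lemma Rabs_large_part_le r : r <> 0%nat -> Rabs (large_part r) <= sumR (fun c => large_term c r) (S K).
Proof.
  intros Hr. unfold large_part. eapply Rle_trans; [apply sumR_Rabs|].
  apply sumR_le. intros c _. unfold large_term.
  destruct (Nat.leb_spec c m), (Nat.ltb_spec m c); try lia; simpl; [rewrite Rabs_R0; lra|].
  rewrite class_part_eq. destruct (admissible c); simpl; [|rewrite Rabs_R0; lra].
  destruct (Nat.eqb_spec r 0); [contradiction|]. simpl. rewrite Rabs_mult.
  pose proof (Rabs_mobius_le_1 c). pose proof (Rabs_f_class_le c r).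
  pose proof (Rabs_pos (mobius c)). pose proof (Rabs_pos (f_class c r)). nra.
Qed.

Lemma large_bound_nonneg c : 0 <= large_bound c.
Proof.
  unfold large_bound. destruct (_ && _)%bool eqn:E; [|lra]. apply andb_true_iff in E as [_ E].
  destruct (admissible_le_z6 c E) as [Hc _]. assert (0 < INR c ^ 3) by (apply pow_lt, (lt_INR 0); lia).
  pose proof f_const_nonneg. pose proof (f_sup_nonneg c).
  assert (0 <= sqrt len_q / INR c ^ 3) by (apply Rdiv_le_0_compat; [apply sqrt_pos|lra]).
  assert (0 <= sqrt len / INR c ^ 3) by (apply Rdiv_le_0_compat; [apply sqrt_pos|lra]).
  apply Rmult_le_pos; [apply Rmult_le_pos; [apply Rmult_le_pos|]|]; lra.
Qed.

Lemma large_term_sq c : sumR (fun r => (large_term c r) ^ 2) q <= (large_bound c) ^ 2.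
Proof.
  unfold large_term, large_bound. destruct ((m <? c)%nat && admissible c)%bool eqn:E.
  2: { rewrite sumR_vanish; [simpl; nra|]. intros; simpl; ring. }
  apply andb_true_iff in E as [_ E]. destruct (admissible_le_z6 c E) as [Hc _].
  assert (Hc3 : 0 < INR c ^ 3) by (apply pow_lt, (lt_INR 0); lia).
  set (BG := f_const * f_sup c).
  assert (HBG : 0 <= BG) by (unfold BG; pose proof f_const_nonneg; pose proof (f_sup_nonneg c); nra).
  set (p1 := sqrt len_q / INR c ^ 3). set (p2 := sqrt len / INR c ^ 3).
  assert (Ep1 : len_q / INR c ^ 6 = p1 ^ 2).
  { unfold p1, Rdiv. rewrite Rpow_mult_distr, pow2_sqrt by apply len_q_nonneg.
    rewrite pow_inv. f_equal. f_equal. ring. }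
  assert (Ep2 : len / INR c ^ 6 = p2 ^ 2).
  { unfold p2, Rdiv. rewrite Rpow_mult_distr, pow2_sqrt by apply len_nonneg.
    rewrite pow_inv. f_equal. f_equal. ring. }
  assert (0 <= p1) by (apply Rdiv_le_0_compat; [apply sqrt_pos|lra]).
  assert (0 <= p2) by (apply Rdiv_le_0_compat; [apply sqrt_pos|lra]).
  assert (Hmax : 0 <= BG * (p1 ^ 2 + 1)) by (apply Rmult_le_pos; nra).
  apply Rle_trans with (sumR (fun r => BG * (p1 ^ 2 + 1) * absf_class c r) q).
  - apply sumR_le. intros r _. simpl andb. destruct (Nat.eqb_spec r 0); simpl.
    + pose proof (absf_class_nonneg c r). nra.
    + pose proof (absf_class_le c r Hc n) as Hu. fold BG in Hu. rewrite Ep1 in Hu.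
      pose proof (absf_class_nonneg c r). nra.
  - rewrite sumR_scal. eapply Rle_trans.
    { apply Rmult_le_compat_l; [auto|]. apply sum_absf_class; auto. }
    fold BG. rewrite Ep2.
    assert ((p1 ^ 2 + 1) * (p2 ^ 2 + 1) <= (p1 + 1) ^ 2 * (p2 + 1) ^ 2)
      by (apply Rmult_le_compat; nra).
    replace (BG * (p1 ^ 2 + 1) * (BG * (p2 ^ 2 + 1)))
      with (BG ^ 2 * ((p1 ^ 2 + 1) * (p2 ^ 2 + 1))) by ring.
    replace ((BG * (p1 + 1) * (p2 + 1)) ^ 2) with (BG ^ 2 * ((p1 + 1) ^ 2 * (p2 + 1) ^ 2)) by ring.
    apply Rmult_le_compat_l; nra.
Qed.

Lemma large_part_sq :
  sumR (fun r => if (r =? 0)%nat then 0 else (large_part r) ^ 2) q <= (sumR large_bound (S K)) ^ 2.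
Proof.
  eapply Rle_trans.
  2: { apply sumR_minkowski; [apply large_bound_nonneg|intros; apply large_term_sq]. }
  apply sumR_le. intros r _. destruct (Nat.eqb_spec r 0); [apply pow2_ge_0|].
  pose proof (Rabs_large_part_le r n).
  assert (0 <= sumR (fun c => large_term c r) (S K)).
  { apply sumR_nonneg. intros c _. unfold large_term.
    destruct (_ && _)%bool; [apply absf_class_nonneg|lra]. }
  rewrite <- (pow2_abs (large_part r)). apply pow_incr. split; [apply Rabs_pos|lra].
Qed.


Hypothesis cut_low : INR m ^ 6 <= Rmin z len_q.
Hypothesis cut_high : Rmin z len_q < INR (S m) ^ 6.

Lemma large_bound_le c :
  large_bound c <= f_const / sqrt x *
    (sqrt len_q * sqrt len * (if (S m <=? c)%nat then / INR c ^ 3 else 0)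
     + (sqrt len_q + sqrt len) * (if upto z6 c then 1 else 0)
     + (if upto z6 c then INR c ^ 3 else 0)).
Proof.
  assert (Hsx : 0 < sqrt x) by (apply sqrt_lt_R0; auto). pose proof f_const_nonneg.
  pose proof (sqrt_pos len). pose proof (sqrt_pos len_q).
  unfold large_bound. destruct ((m <? c)%nat && admissible c)%bool eqn:E.
  - apply andb_true_iff in E as [E1 E2]. apply Nat.ltb_lt in E1.
    destruct (admissible_le_z6 c E2) as [Hc Hcz].
    destruct (Nat.leb_spec (S m) c); [|lia].
    replace (upto z6 c) with true
      by (symmetry; unfold upto; destruct (Nat.leb_spec 1 c), (Rle_dec (INR c) z6); auto; lia || lra).
    assert (INR c <> 0) by (apply not_0_INR; lia).
    right. unfold f_sup. field. lra.
  - apply Rmult_le_pos; [apply Rdiv_le_0_compat; lra|].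
    assert (0 <= (if (S m <=? c)%nat then / INR c ^ 3 else 0)).
    { destruct (Nat.leb_spec (S m) c); [|lra]. apply Rlt_le, Rinv_0_lt_compat, pow_lt, (lt_INR 0); lia. }
    assert (0 <= INR c ^ 3) by (apply pow_le, pos_INR).
    assert (0 <= sqrt len_q * sqrt len) by nra.
    destruct (upto z6 c); nra.
Qed.

Lemma large_bound_vanish c : z6 < INR (S m) -> large_bound c = 0.
Proof.
  intros Hbig. unfold large_bound. destruct ((m <? c)%nat && admissible c)%bool eqn:E; auto.
  apply andb_true_iff in E as [E1 E2]. apply Nat.ltb_lt in E1.
  destruct (admissible_le_z6 c E2) as [_ Hc].
  assert (INR (S m) <= INR c) by (apply le_INR; lia). lra.
Qed.

Lemma sqrt_len_q_lt : INR (S m) <= z6 -> sqrt len_q < INR (S m) ^ 3.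
Proof.
  intros Hsmall. assert (HS1 : 0 <= INR (S m)) by apply pos_INR.
  assert (HSz : INR (S m) ^ 6 <= z) by (rewrite <- z6_pow6; apply pow_incr; lra).
  assert (len_q < INR (S m) ^ 6) by (unfold Rmin in cut_high; destruct (Rle_dec z len_q); lra).
  rewrite <- (sqrt_pow2 (INR (S m) ^ 3)) by (apply pow_le; lra).
  apply sqrt_lt_1_alt. split; [apply len_q_nonneg|].
  now replace ((INR (S m) ^ 3) ^ 2) with (INR (S m) ^ 6) by ring.
Qed.

Lemma sum_large_bound_le :
  sumR large_bound (S K) <= f_const / sqrt x * (4 * sqrt len * z6 + z6 ^ 4).
Proof.
  assert (Hsx : 0 < sqrt x) by (apply sqrt_lt_R0; auto). pose proof f_const_nonneg.
  pose proof z6_pos. pose proof (sqrt_pos len). pose proof (sqrt_pos len_q).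
  assert (0 <= f_const / sqrt x) by (apply Rdiv_le_0_compat; lra).
  destruct (Rlt_dec z6 (INR (S m))) as [Hbig|Hsmall].
  { rewrite sumR_vanish by (intros; now apply large_bound_vanish).
    apply Rmult_le_pos; auto. pose proof (pow_le z6 4). nra. }
  assert (HS1 : 1 <= INR (S m)) by (apply (le_INR 1); lia).
  pose proof (sqrt_len_q_lt (Rnot_lt_le _ _ Hsmall)). pose proof sqrt_len_q_le_len.
  eapply Rle_trans; [apply sumR_le; intros c _; apply large_bound_le|].
  rewrite sumR_scal, !sumR_plus, !sumR_scal. apply Rmult_le_compat_l; auto.
  assert (T1 : sqrt len_q * sqrt len * sumR (fun c => if (S m <=? c)%nat then / INR c ^ 3 else 0) (S K)
               <= 2 * sqrt len * z6).
  { eapply Rle_trans; [apply Rmult_le_compat_l; [nra|apply sumR_inv_cube_tail; lia]|].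
    set (s := INR (S m)) in *.
    assert (sqrt len_q / s ^ 2 <= s).
    { apply Rmult_le_reg_r with (s ^ 2); [apply pow_lt; lra|]. unfold Rdiv.
      rewrite Rmult_assoc, Rinv_l by (apply pow_nonzero; lra).
      replace (s * s ^ 2) with (s ^ 3) by ring. lra. }
    replace (sqrt len_q * sqrt len * (2 / s ^ 2)) with (2 * sqrt len * (sqrt len_q / s ^ 2))
      by (field; lra). nra. }
  assert (T2 : sumR (fun c => if upto z6 c then 1 else 0) (S K) <= z6) by (apply count_upto_le; lra).
  assert (T3 : sumR (fun c => if upto z6 c then INR c ^ 3 else 0) (S K) <= z6 ^ 4)
    by (apply sumR_cubes_le; lra).
  assert (0 <= sumR (fun c => if upto z6 c then 1 else 0) (S K))
    by (apply sumR_nonneg; intros c _; destruct (upto z6 c); lra).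
  nra.
Qed.

(* By the choice of the cut, [q m^6 <= |I| <= 2 x], so [q m^8 / x <= 2 m^2 <= 2 z^(1/3)]. *)
Lemma small_part_sq :
  sumR (fun r => if (r =? 0)%nat then 0 else (small_part r) ^ 2) q <= 2 * f_const ^ 2 * z6 ^ 2.
Proof.
  pose proof f_const_nonneg. assert (Hsx : 0 < sqrt x) by (apply sqrt_lt_R0; auto).
  pose proof z6_pos. pose proof q_ge2_R.
  eapply Rle_trans with (INR q * (f_const / sqrt x * INR m ^ 4) ^ 2).
  { rewrite <- sumR_const. apply sumR_le. intros r Hr. destruct (Nat.eqb_spec r 0); [apply pow2_ge_0|].
    rewrite <- (pow2_abs (small_part r)). apply pow_incr.
    split; [apply Rabs_pos|now apply Rabs_small_part_le]. }
  assert (Hx2 : sqrt x ^ 2 = x) by (apply pow2_sqrt; lra).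
  assert (Hm : INR m <= z6).
  { apply (pow_le_reg _ _ 6); [apply pos_INR|lra|lia|]. rewrite z6_pow6. pose proof (Rmin_l z len_q). lra. }
  assert (Hqm : INR q * INR m ^ 6 <= 2 * x).
  { pose proof (Rmin_r z len_q). unfold len_q, len in *.
    apply Rmult_le_reg_r with (/ INR q); [apply Rinv_0_lt_compat; lra|].
    replace (INR q * INR m ^ 6 * / INR q) with (INR m ^ 6) by (field; lra).
    replace (2 * x * / INR q) with (2 * x / INR q) by reflexivity.
    assert ((b - a) / INR q <= 2 * x / INR q) by (apply Rmult_le_compat_r; [apply Rlt_le, Rinv_0_lt_compat|]; lra).
    lra. }
  replace (INR q * (f_const / sqrt x * INR m ^ 4) ^ 2)
    with (f_const ^ 2 / sqrt x ^ 2 * ((INR q * INR m ^ 6) * INR m ^ 2)) by (field; lra).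
  rewrite Hx2.
  assert (INR m ^ 2 <= z6 ^ 2) by (apply pow_incr; split; [apply pos_INR|lra]).
  assert (0 <= INR q * INR m ^ 6) by (apply Rmult_le_pos; [lra|apply pow_le, pos_INR]).
  assert (0 <= f_const ^ 2 / x) by (apply Rdiv_le_0_compat; [apply pow2_ge_0|lra]).
  apply Rle_trans with (f_const ^ 2 / x * (2 * x * z6 ^ 2)); [|right; field; lra].
  apply Rmult_le_compat_l; auto. pose proof (pow2_ge_0 (INR m)). nra.
Qed.

Lemma large_part_sq_le :
  sumR (fun r => if (r =? 0)%nat then 0 else (large_part r) ^ 2) q <= 68 * f_const ^ 2 * z6 ^ 2.
Proof.
  pose proof f_const_nonneg. assert (Hsx : 0 < sqrt x) by (apply sqrt_lt_R0; auto).
  pose proof z6_pos. pose proof len_nonneg.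
  eapply Rle_trans; [apply large_part_sq|].
  assert (0 <= sumR large_bound (S K)) by (apply sumR_nonneg; intros; apply large_bound_nonneg).
  eapply Rle_trans; [apply pow_incr; split; [auto|apply sum_large_bound_le]|].
  assert (Hx2 : sqrt x ^ 2 = x) by (apply pow2_sqrt; lra).
  assert (Hl2 : sqrt len ^ 2 = len) by (apply pow2_sqrt; lra).
  assert (len <= 2 * x) by (unfold len; lra).
  assert (z6 ^ 6 <= 2 * x) by (rewrite z6_pow6; lra).
  replace ((f_const / sqrt x * (4 * sqrt len * z6 + z6 ^ 4)) ^ 2)
    with (f_const ^ 2 / sqrt x ^ 2 * (4 * sqrt len * z6 + z6 ^ 4) ^ 2) by (field; lra).
  rewrite Hx2.
  assert ((4 * sqrt len * z6 + z6 ^ 4) ^ 2 <= 2 * (16 * len * z6 ^ 2 + z6 ^ 6 * z6 ^ 2)).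
  { assert (E : 2 * (16 * sqrt len ^ 2 * z6 ^ 2 + z6 ^ 6 * z6 ^ 2) - (4 * sqrt len * z6 + z6 ^ 4) ^ 2
              = (4 * sqrt len * z6 - z6 ^ 4) ^ 2) by ring.
    rewrite Hl2 in E. pose proof (pow2_ge_0 (4 * sqrt len * z6 - z6 ^ 4)). lra. }
  assert (0 <= z6 ^ 2) by apply pow2_ge_0.
  assert (0 <= f_const ^ 2 / x) by (apply Rdiv_le_0_compat; [apply pow2_ge_0|lra]).
  apply Rle_trans with (f_const ^ 2 / x * (68 * x * z6 ^ 2)); [|right; field; lra].
  apply Rmult_le_compat_l; auto. nra.
Qed.

Lemma sum_sq_centred_le : sumR (fun r => (centred r) ^ 2) q <= 140 * f_const ^ 2 * z6 ^ 2.
Proof.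
  pose proof small_part_sq. pose proof large_part_sq_le.
  eapply Rle_trans with
    (2 * sumR (fun r => if (r =? 0)%nat then 0 else (small_part r) ^ 2) q
     + 2 * sumR (fun r => if (r =? 0)%nat then 0 else (large_part r) ^ 2) q); [|lra].
  rewrite <- !sumR_scal, <- sumR_plus. apply sumR_le. intros r _.
  destruct (Nat.eqb_spec r 0) as [->|Hr]; [unfold centred; simpl; lra|].
  rewrite centred_split by auto. pose proof (pow2_ge_0 (small_part r - large_part r)). nra.
Qed.

End Cut.

Section Character.
Variable chi : nat -> C.
Hypothesis chi_char : dirichlet_char q chi.

Lemma inner_sum_term_eq c n :
  (if ((1 <=? c)%nat && (1 <=? n)%nat && (if Rle_dec (INR c ^ 6) z then true else false) &&
       in_interval a b lc rc (INR n * INR c ^ 6))%bool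
   then Cmult (Cmult (Cmult (RtoC (mobius c)) (chi n)) (pow_n (chi c) 6)) (RtoC (f (INR n)))
   else RtoC 0)
  = sumC (fun r => if (res c n =? r)%nat then Cmult (chi r) (RtoC (weight c n)) else RtoC 0) q.
Proof.
  rewrite (sumC_delta q (res c n) (fun r => Cmult (chi r) (RtoC (weight c n)))) by apply res_lt.
  unfold weight, res, admissible, in_range.
  rewrite <- (chi_mod q chi chi_char), (chi_mul q chi chi_char), (chi_pow q chi chi_char).
  destruct (1 <=? c)%nat, (1 <=? n)%nat, (Rle_dec (INR c ^ 6) z),
    (in_interval a b lc rc (INR n * INR c ^ 6)); simpl; rewrite ?RtoC_mult; ring.
Qed.

Lemma inner_sum_classes :
  inner_sum K z a b lc rc chi = sumC (fun r => Cmult (chi r) (RtoC (class_weight r))) q.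
Proof.
  unfold inner_sum. rewrite sum_n_sumC.
  transitivity (sumC (fun c => sumC (fun r => sumC (fun n =>
    if (res c n =? r)%nat then Cmult (chi r) (RtoC (weight c n)) else RtoC 0) (S K)) q) (S K)).
  - apply sumC_ext. intros c _. rewrite sum_n_sumC, <- sumC_swap.
    apply sumC_ext. intros n _. apply inner_sum_term_eq.
  - rewrite sumC_swap. apply sumC_ext. intros r _. unfold class_weight, class_part.
    rewrite <- sumC_RtoC, <- sumC_scal. apply sumC_ext. intros c _.
    rewrite <- sumC_RtoC, <- sumC_scal. apply sumC_ext. intros n _.
    destruct (res c n =? r)%nat; [auto|ring].
Qed.

(* Orthogonality to the principal character lets us subtract the constant [ref_value m];
   [chi 0 = 0] lets us drop the class [0]. *)
Lemma inner_sum_centred m : ~ (forall n, chi n = principal_char q n) ->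
  inner_sum K z a b lc rc chi = sumC (fun r => Cmult (chi r) (RtoC (centred m r))) q.
Proof.
  intros Hnp. rewrite inner_sum_classes.
  transitivity (sumC (fun r => Cplus (Cmult (chi r) (RtoC (centred m r)))
                                     (Cmult (RtoC (ref_value m)) (chi r))) q).
  - apply sumC_ext. intros r _. unfold centred. destruct (Nat.eqb_spec r 0) as [->|].
    + rewrite (chi_0 q q_prime chi chi_char). ring.
    + rewrite RtoC_minus. ring.
  - rewrite sumC_plus, sumC_scal, (sum_nonprincipal_char q q_prime chi chi_char Hnp). ring.
Qed.

End Character.

End Setting.

Lemma sixth_root_floor t : 0 <= t -> exists m : nat, INR m ^ 6 <= t /\ t < INR (S m) ^ 6.
Proof.
  intros Ht.
  assert (G : forall N : nat, t < INR N ^ 6 -> exists m : nat, INR m ^ 6 <= t /\ t < INR (S m) ^ 6).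
  { induction N as [|N IH]; intros H; [simpl in H; lra|].
    destruct (Rlt_dec t (INR N ^ 6)); [now apply IH|]. exists N. split; lra. }
  destruct (archimed t) as [Hup _]. apply (G (Z.to_nat (up t))).
  assert (0 < up t)%Z by (apply lt_IZR; lra).
  rewrite INR_IZR_INZ, Z2Nat.id by lia.
  assert (1 <= IZR (up t)) by (apply IZR_le; lia).
  assert (IZR (up t) <= IZR (up t) ^ 6).
  { replace (IZR (up t)) with (IZR (up t) ^ 1) at 1 by ring. apply Rle_pow; auto; lia. }
  lra.
Qed.

Lemma ForallOrdPairs_impl_in (A : Type) (R1 R2 : A -> A -> Prop) L :
  ForallOrdPairs R1 L -> (forall g h, In g L -> In h L -> R1 g h -> R2 g h) ->
  ForallOrdPairs R2 L.
Proof.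
  induction 1 as [|a l Ha Hl IH]; intros H'; constructor.
  - apply Forall_forall. intros y Hy. rewrite Forall_forall in Ha. apply H'; simpl; auto.
  - apply IH. intros g h Hg Hh. apply H'; simpl; auto.
Qed.

(* Bessel's inequality for the orthogonal family of characters, each of norm [q - 1]. *)
Lemma char_sum_le_sum_sq_centred z a b lc rc q K L m :
  prime.prime q = true -> enum_nonprincipal q L ->
  char_sum q L K z a b lc rc <= sumR (fun r => (centred z a b lc rc q K m r) ^ 2) q.
Proof.
  intros Hp [HL1 HL2].
  pose proof (q_ge2 q Hp).
  unfold char_sum, phi. rewrite (PrimeFacts.totient_of_prime q Hp).
  assert (HN : 0 < INR (q - 1)) by (apply (lt_INR 0); lia).
  set (w := fun r => RtoC (centred z a b lc rc q K m r)).
  assert (E : fold_right (fun chi acc => Cmod (inner_sum K z a b lc rc chi) ^ 2 + acc) 0 L =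
              fold_right (fun chi acc => Cmod (inner q w chi) ^ 2 + acc) 0 L).
  { apply fold_sum_ext, Forall_forall. intros chi Hin. apply HL2 in Hin as [Hc Hnp].
    rewrite (inner_sum_centred z a b lc rc q K Hp chi Hc m Hnp), <- Cmod_conj. do 2 f_equal.
    unfold inner. rewrite sumC_conj. apply sumC_ext. intros i _.
    unfold w. apply injective_projections; simpl; ring. }
  assert (Hortho : ForallOrdPairs (fun g h => inner q g h = RtoC 0) L).
  { apply (ForallOrdPairs_impl_in _ _ _ L HL1). intros g h Hg Hh Hgh.
    apply HL2 in Hg as [Hg _]. apply HL2 in Hh as [Hh _]. now apply inner_distinct_chars. }
  assert (Hnorm : List.Forall (fun g => inner q g g = RtoC (INR (q - 1))) L).
  { apply Forall_forall. intros g Hg. apply HL2 in Hg as [Hg _]. now apply inner_char_self. }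
  pose proof (bessel q (INR (q - 1)) HN L Hortho Hnorm w) as Hbessel.
  assert (Ew : fst (inner q w w) = sumR (fun r => (centred z a b lc rc q K m r) ^ 2) q).
  { unfold inner. rewrite sumC_fst. apply sumR_ext. intros i _. unfold w. simpl. ring. }
  rewrite E. rewrite Ew in Hbessel.
  apply Rmult_le_reg_l with (INR (q - 1)); [auto|]. rewrite <- Rmult_assoc, Rinv_r by lra. lra.
Qed.

Lemma char_sum_le_cbrt x z a b lc rc q K L :
  0 < x -> prime.prime q = true -> 0 < z -> z <= 2 * x -> x <= a -> a <= b -> b <= 3 * x ->
  enum_nonprincipal q L ->
  char_sum q L K z a b lc rc <= 140 * f_const ^ 2 * rpow z (1/3).
Proof.
  intros Hx Hp Hz Hz2 Ha Hab Hb HL.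
  assert (Hmin : 0 <= Rmin z (len_q a b q)).
  { apply Rmin_glb; [lra|]. apply (len_q_nonneg a b q Hp Hab). }
  destruct (sixth_root_floor _ Hmin) as [m [Hm1 Hm2]].
  eapply Rle_trans; [now apply (char_sum_le_sum_sq_centred z a b lc rc q K L m)|].
  eapply Rle_trans; [now apply (sum_sq_centred_le x z a b lc rc q K)|].
  right. do 2 f_equal. unfold rpow, z6. destruct (Rlt_dec 0 z); [|lra].
  rewrite <- Rpower_pow by apply exp_pos. rewrite Rpower_mult. f_equal. simpl. field.
Qed.

Lemma rpow_nonneg t s : 0 <= rpow t s.
Proof. unfold rpow. destruct (Rlt_dec 0 t); [left; apply exp_pos|lra]. Qed.

Lemma ln_pow6_lower_bound eps x q : 0 < eps -> 0 < x -> (2 <= q)%nat ->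
  INR q <= Rpower x (1 - eps) -> (ln 2 / (1 + eps)) ^ 6 <= ln x ^ 6.
Proof.
  intros He Hx Hq Hqx. assert (H2q : 2 <= INR q) by (apply (le_INR 2); auto).
  assert (Hl2 : 0 < ln 2) by (rewrite <- ln_1; apply ln_increasing; lra).
  assert (Hl : ln 2 <= (1 - eps) * ln x).
  { unfold Rpower in Hqx. rewrite <- (ln_exp ((1 - eps) * ln x)). apply ln_le; lra. }
  assert (ln 2 <= Rabs (1 - eps) * Rabs (ln x))
    by (rewrite <- Rabs_mult; eapply Rle_trans; [apply Hl|apply Rle_abs]).
  assert (Rabs (1 - eps) <= 1 + eps) by (apply Rabs_le; lra).
  replace (ln x ^ 6) with (Rabs (ln x) ^ 6)
    by (replace 6%nat with (2 * 3)%nat by reflexivity; now rewrite !pow_mult, pow2_abs).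
  apply pow_incr. split; [apply Rdiv_le_0_compat; lra|].
  apply Rmult_le_reg_r with (1 + eps); [lra|]. unfold Rdiv. rewrite Rmult_assoc, Rinv_l by lra.
  pose proof (Rabs_pos (ln x)). nra.
Qed.

Theorem mainTheorem9 :
  forall eps : R, 0 < eps ->
  exists Ceps : R, 0 < Ceps /\
  forall (x : R) (q : nat) (z : R) (a b : R) (lc rc : bool)
         (L : list (nat -> C)) (K : nat),
    0 < x ->
    prime.prime q = true ->
    INR q <= Rpower x (1 - eps) ->
    0 < z -> z <= 2 * x ->
    x <= a -> a <= b -> b <= 3 * x ->
    3 * x <= INR K ->
    enum_nonprincipal q L ->
    char_sum q L K z a b lc rc
      <= Ceps * (rpow z (1/3) + rpow (b - a) (1/6) * Rpower (INR q) (5/6)) * ln x ^ 6.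
Proof.
  intros eps He. set (d := ln 2 / (1 + eps)).
  assert (Hd1 : 0 < d) by (apply Rdiv_lt_0_compat; [rewrite <- ln_1; apply ln_increasing|]; lra).
  assert (Hd : 0 < d ^ 6) by (apply pow_lt; auto).
  set (A := 140 * f_const ^ 2 + 1).
  assert (HA : 0 < A / d ^ 6)
    by (apply Rdiv_lt_0_compat; [unfold A; pose proof (pow2_ge_0 f_const); lra|auto]).
  exists (A / d ^ 6). split; [auto|].
  (* the sums range over [0, K] for every [K] *)
  intros x q z a b lc rc L K Hx Hp Hqx Hz Hz2 Ha Hab Hb _ HL.
  pose proof (char_sum_le_cbrt x z a b lc rc q K L Hx Hp Hz Hz2 Ha Hab Hb HL) as Hbound.
  assert (Hlog : d ^ 6 <= ln x ^ 6) by (apply (ln_pow6_lower_bound eps x q); auto; now apply q_ge2).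
  pose proof (rpow_nonneg z (1/3)) as Hz3.
  assert (0 <= rpow (b - a) (1/6) * Rpower (INR q) (5/6))
    by (apply Rmult_le_pos; [apply rpow_nonneg|left; apply exp_pos]).
  assert (A / d ^ 6 * rpow z (1/3) * d ^ 6
          <= A / d ^ 6 * (rpow z (1/3) + rpow (b - a) (1/6) * Rpower (INR q) (5/6)) * ln x ^ 6)
    by (apply Rmult_le_compat; [apply Rmult_le_pos| |apply Rmult_le_compat_l|]; lra).
  assert (A / d ^ 6 * rpow z (1/3) * d ^ 6 = A * rpow z (1/3)) by (field; lra).
  unfold A in *. nra.
Qed.
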